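(* For every $X$ in $\mathsf{SquaMS}$, $M\otimes C(X)\cong C(M\otimes X)$ and $N\otimes C(X)\cong C(N\otimes X)$ (isomorphisms in $\mathsf{SquaMS}$, natural in $X$, given by $m\otimes(x_k)_k\mapsto(m\otimes x_k)_k$).
   Context: Let $M_0=\{(r,s)\in[0,1]^2: r\in\{0,1\}\text{ or } s\in\{0,1\}\}$. A square metric space is a pair $(X,S_X)$ with $X$ a metric space with all distances at most $2$ and $S_X\colon M_0\to X$ injective such that (sq1) for $i\in\{0,1\}$, $r,s\in[0,1]$: $d_X(S_X(i,r),S_X(i,s))=|s-r|$ and $d_X(S_X(r,i),S_X(s,i))=|s-r|$; (sq2) $d_X(S_X(r,s),S_X(t,u))\ge|r-t|+|s-u|$. $\mathsf{SquaMS}$: these objects, with short maps $f$ satisfying $f\circ S_X=S_Y$ as morphisms. Let $N=\{0,1,2\}^2$, $M=N\setminus\{(1,1)\}$, also viewed as points of $\mathbb{R}^2$. For $P\in\{M,N\}$ and $X$ in $\mathsf{SquaMS}$, $P\otimes X=(P\times X)/\!\sim$, where $\sim$ is generated by $(m,S_X(p))\sim(n,S_X(q))$ whenever $m,n\in P$ differ by exactly $1$ in exactly one coordinate and $(m+p)/3=(n+q)/3$; $m\otimes x$ is the class of $(m,x)$; the metric is the quotient of $d((a,u),(b,v))=\frac13 d_X(u,v)$ if $a=b$, $2$ otherwise (infimum over finite chains, $\sim$-related consecutive pairs counting $0$); $S_{P\otimes X}(p)=m\otimes S_X(3p-m)$ for any $m\in P$ with $p\in(m+[0,1]^2)/3$;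 $(P\otimes f)(m\otimes x)=m\otimes f(x)$. The Cauchy completion $C(X)$ consists of Cauchy sequences modulo $d_X(x_i,y_i)\to0$, with $d((x_i),(y_i))=\lim d_X(x_i,y_i)$ and $S_{C(X)}(p)$ the class of the constant sequence $S_X(p)$; $C(f)((x_i))=(f(x_i))$. *)

From Stdlib Require Import Reals Lra List Relations ClassicalEpsilon.
Open Scope R_scope.
Set Implicit Arguments.

Definition is_glb_R (E : R -> Prop) (m : R) : Prop :=
  (forall x, E x -> m <= x) /\ (forall y, (forall x, E x -> y <= x) -> y <= m).

(* the infimum of E (meaningful when E is nonempty and bounded below) *)
Definition Rinf (E : R -> Prop) : R := epsilon (inhabits 0) (is_glb_R E).

Definition Rchoose (P : R -> Prop) : R := epsilon (inhabits 0) P.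

Definition I01 (r : R) : Prop := 0 <= r <= 1.
Definition inM0 (p : R * R) : Prop :=
  I01 (fst p) /\ I01 (snd p) /\
  (fst p = 0 \/ fst p = 1 \/ snd p = 0 \/ snd p = 1).
Definition M0 := {p : R * R | inM0 p}.

Lemma inM0_00 : inM0 (0, 0).
Proof. unfold inM0, I01; simpl; repeat split; lra. Qed.
Definition m00 : M0 := exist _ (0, 0) inM0_00.

Record SqData := {
  sq_car :> Type;
  sd : sq_car -> sq_car -> R;
  sS : M0 -> sq_car
}.

Definition isSquaMS (X : SqData) : Prop :=
  (forall x y : X, 0 <= sd X x y) /\
  (forall x y : X, sd X x y = 0 <-> x = y) /\
  (forall x y : X, sd X x y = sd X y x) /\
  (forall x y z : X, sd X x z <= sd X x y + sd X y z) /\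
  (forall x y : X, sd X x y <= 2) /\
  (forall p q : M0, sS X p = sS X q -> p = q) /\
  (* (sq1), first coordinate fixed to i in {0,1} *)
  (forall p q : M0, fst (proj1_sig p) = fst (proj1_sig q) ->
     (fst (proj1_sig p) = 0 \/ fst (proj1_sig p) = 1) ->
     sd X (sS X p) (sS X q) = Rabs (snd (proj1_sig q) - snd (proj1_sig p))) /\
  (* (sq1), second coordinate fixed to i in {0,1} *)
  (forall p q : M0, snd (proj1_sig p) = snd (proj1_sig q) ->
     (snd (proj1_sig p) = 0 \/ snd (proj1_sig p) = 1) ->
     sd X (sS X p) (sS X q) = Rabs (fst (proj1_sig q) - fst (proj1_sig p))) /\
  (* (sq2) *)
  (forall p q : M0,
     Rabs (fst (proj1_sig p) - fst (proj1_sig q)) +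
     Rabs (snd (proj1_sig p) - snd (proj1_sig q)) <= sd X (sS X p) (sS X q)).

Lemma isSquaMS_nonneg (X : SqData) : isSquaMS X -> forall x y : X, 0 <= sd X x y.
Proof. intros H; apply H. Qed.

Lemma isSquaMS_refl (X : SqData) : isSquaMS X -> forall x : X, sd X x x = 0.
Proof. intros H x; destruct H as [_ [H _]]; apply H; reflexivity. Qed.

Definition short (X Y : SqData) (f : X -> Y) : Prop :=
  forall a b : X, sd Y (f a) (f b) <= sd X a b.
Definition morph (X Y : SqData) (f : X -> Y) : Prop :=
  short X Y f /\ forall p : M0, f (sS X p) = sS Y p.

Definition sq_iso (X Y : SqData) (f : X -> Y) : Prop :=
  isSquaMS X /\ isSquaMS Y /\ morph X Y f /\
  exists g : Y -> X, morph Y X g /\ (forall x, g (f x) = x) /\ (forall y, f (g y) = y).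

Inductive shape := ShM | ShN.

Definition inP (sh : shape) (m : nat * nat) : Prop :=
  (fst m <= 2)%nat /\ (snd m <= 2)%nat /\ (sh = ShM -> m <> (1%nat, 1%nat)).
Definition Pel (sh : shape) := {m : nat * nat | inP sh m}.

Lemma inP_00 (sh : shape) : inP sh (0%nat, 0%nat).
Proof. unfold inP; simpl; repeat split; try (intros; discriminate); auto with arith. Qed.
Definition pel00 (sh : shape) : Pel sh := exist _ (0%nat, 0%nat) (inP_00 sh).

Definition adjacent (m n : nat * nat) : Prop :=
  ((fst m = S (fst n) \/ fst n = S (fst m)) /\ snd m = snd n) \/
  (fst m = fst n /\ (snd m = S (snd n) \/ snd n = S (snd m))).

Definition scl (m : nat * nat) (p : R * R) : R * R :=
  ((INR (fst m) + fst p) / 3, (INR (snd m) + snd p) / 3).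

Section Tensor.
Variables (sh : shape) (X : SqData).

Definition TE := (Pel sh * X)%type.

Definition tgen (a b : TE) : Prop :=
  exists p q : M0, snd a = sS X p /\ snd b = sS X q /\
    adjacent (proj1_sig (fst a)) (proj1_sig (fst b)) /\
    scl (proj1_sig (fst a)) (proj1_sig p) = scl (proj1_sig (fst b)) (proj1_sig q).

Definition tsim : relation TE := clos_refl_sym_trans TE tgen.

Definition tcar := {A : TE -> Prop | exists a, A = tsim a}.
Definition tcls (a : TE) : tcar := exist _ (tsim a) (ex_intro _ a eq_refl).

Definition bd (a b : TE) : R :=
  let m := proj1_sig (fst a) in let n := proj1_sig (fst b) in
  if (Nat.eqb (fst m) (fst n) && Nat.eqb (snd m) (snd n))%bool
  then sd X (snd a) (snd b) / 3 else 2.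

Fixpoint chain_ok (a : TE) (l : list (TE * TE)) (b : TE) : Prop :=
  match l with
  | nil => tsim a b
  | (p, q) :: l' => tsim a p /\ chain_ok q l' b
  end.
Fixpoint chain_cost (l : list (TE * TE)) : R :=
  match l with
  | nil => 0
  | (p, q) :: l' => bd p q + chain_cost l'
  end.

Definition tdist (A B : tcar) : R :=
  Rinf (fun r => exists a b l, proj1_sig A a /\ proj1_sig B b /\
                               chain_ok a l b /\ r = chain_cost l).

Definition inhPM : inhabited (Pel sh * M0) := inhabits (pel00 sh, m00).

(* S_{P (x) X}(p) = m (x) S_X(3p - m) for some m in P with p = (m + q)/3, q in M0 *)
Definition tS (p : M0) : tcar :=
  let mq := epsilon inhPM
              (fun mq : Pel sh * M0 =>
                 scl (proj1_sig (fst mq)) (proj1_sig (snd mq)) = proj1_sig p) in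
  tcls (fst mq, sS X (snd mq)).

Definition TD : SqData := {| sq_car := tcar; sd := tdist; sS := tS |}.

End Tensor.

Arguments tcls {sh X} a.

Definition tensmap (sh : shape) (X Y : SqData) (f : X -> Y) (A : tcar sh X) : tcar sh Y :=
  let a := epsilon (inhabits (pel00 sh, sS X m00)) (fun a => proj1_sig A a) in
  tcls (fst a, f (snd a)).

Section Completion.
Variable X : SqData.

Definition Cauchy (s : nat -> X) : Prop :=
  forall eps, 0 < eps -> exists N : nat, forall n m : nat,
    (N <= n)%nat -> (N <= m)%nat -> sd X (s n) (s m) < eps.

Definition cequiv (s t : nat -> X) : Prop :=
  Un_cv (fun n => sd X (s n) (t n)) 0.

Definition cclass (s : nat -> X) : (nat -> X) -> Prop :=
  fun t => Cauchy t /\ cequiv s t.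

Definition ccar := {A : (nat -> X) -> Prop | exists s, Cauchy s /\ A = cclass s}.

Definition cdist (A B : ccar) : R :=
  Rchoose (fun r => exists s t, proj1_sig A s /\ proj1_sig B t /\
                                Un_cv (fun n => sd X (s n) (t n)) r).

Lemma const_Cauchy (H : forall x : X, sd X x x = 0) (x : X) : Cauchy (fun _ => x).
Proof. intros eps Heps; exists 0%nat; intros; rewrite H; exact Heps. Qed.

Definition cS (H : forall x : X, sd X x x = 0) (p : M0) : ccar :=
  exist _ (cclass (fun _ => sS X p))
        (ex_intro _ (fun _ => sS X p) (conj (const_Cauchy H (sS X p)) eq_refl)).

Definition CD (H : forall x : X, sd X x x = 0) : SqData :=
  {| sq_car := ccar; sd := cdist; sS := cS H |}.

End Completion.

(* y = C(g)(x): g maps every representative of x into y *)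
Definition Crel (X Y : SqData) (g : X -> Y) (x : ccar X) (y : ccar Y) : Prop :=
  forall s, proj1_sig x s -> proj1_sig y (fun k => g (s k)).

Lemma tdist_refl (sh : shape) (X : SqData) :
  (forall x y : X, 0 <= sd X x y) -> forall A : tcar sh X, tdist A A = 0.
Proof.
  intros Hnn A.
  set (E := fun r => exists a b l, proj1_sig A a /\ proj1_sig A b /\
                                   @chain_ok sh X a l b /\ r = @chain_cost sh X l).
  assert (Hc : forall l, 0 <= @chain_cost sh X l).
  { induction l as [|[p q] l IH]; simpl; [lra|].
    assert (0 <= @bd sh X p q).
    { unfold bd; destruct (_ && _)%bool; [specialize (Hnn (snd p) (snd q)); lra | lra]. }
    lra. }
  assert (HE : E 0).
  { destruct A as [A [a0 ->]]. exists a0, a0, nil; simpl.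
    repeat split; apply rst_refl. }
  assert (Hlb : forall x, E x -> 0 <= x).
  { intros x [a [b [l [_ [_ [_ ->]]]]]]; apply Hc. }
  unfold tdist. fold E. unfold Rinf.
  assert (Hg : is_glb_R E 0).
  { split; [exact Hlb | intros y Hy; apply Hy; exact HE]. }
  destruct (epsilon_spec (inhabits 0) (is_glb_R E) (ex_intro _ 0 Hg)) as [H1 H2].
  apply Rle_antisym; [apply H1; exact HE | apply H2; exact Hlb].
Qed.

Arguments morph : clear implicits.
Arguments sq_iso : clear implicits.
Arguments Crel : clear implicits.
Arguments tensmap : clear implicits.
Arguments short : clear implicits.

(** The map sends the class of [(m, xi)] to the limit of [m (x) x_k] for any
    representative [(x_k)] of [xi]; it is well defined because
    [d(m (x) x, m (x) y) <= d(x, y) / 3] and boundary points of [C(X)] are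
    constant sequences.  It preserves distances: sampling a chain of
    [P (x) C(X)] at a fixed index, with representatives that are constant on
    the boundary, gives chains of [P (x) X] whose costs converge to the
    original cost; conversely [X] sits isometrically in [C(X)] as constant
    sequences.  It is onto: a Cauchy sequence of [P (x) X] either keeps a fixed
    distance from the glued points, and then short chains cannot leave a cell,
    so the sequence eventually lives in a single cell; or it comes arbitrarily
    close to them, and as the boundary is compact (each side is an isometric
    copy of [0, 1] by (sq1)) it converges to a glued point.
    That [P (x) X] is again a square metric space rests on (sq2), which bounds
    the distance of two glued points below by the l1 distance of their
    positions in the square, and on (sq1) along the three cell sides covering
    each side of the square. *)

From Stdlib Require Import Reals Lra Lia List Relations ClassicalEpsilon Classical
  FunctionalExtensionality PropExtensionality ProofIrrelevance.
Open Scope R_scope.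
Import ListNotations.

Lemma proj1_sig_inj {A : Type} {P : A -> Prop} (x y : {a : A | P a}) :
  proj1_sig x = proj1_sig y -> x = y.
Proof.
  destruct x as [x Hx], y as [y Hy]; simpl; intros ->; f_equal; apply proof_irrelevance.
Qed.

Lemma Rinf_glb (E : R -> Prop) :
  (exists x, E x) -> (exists b, forall x, E x -> b <= x) -> is_glb_R E (Rinf E).
Proof.
  intros [x0 Hx0] [b Hb].
  assert (Hex : exists m, is_glb_R E m).
  { destruct (completeness (fun y => E (- y))) as [M [HM1 HM2]].
    - exists (- b). intros y Hy. specialize (Hb _ Hy). lra.
    - exists (- x0). rewrite Ropp_involutive. exact Hx0.
    - exists (- M). split.
      + intros x Hx. assert (E (- - x)) by (rewrite Ropp_involutive; exact Hx).
        specialize (HM1 _ H). lra.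
      + intros y Hy. assert (M <= - y) by (apply HM2; intros z Hz; specialize (Hy _ Hz); lra).
        lra. }
  unfold Rinf. apply epsilon_spec. exact Hex.
Qed.

Lemma Un_cv_const (c : R) : Un_cv (fun _ => c) c.
Proof. intros e he. exists 0%nat. intros n _. unfold R_dist. rewrite Rminus_diag, Rabs_R0. auto. Qed.

Lemma Un_cv_perturb (u v w : nat -> R) l :
  Un_cv u l -> (forall n, Rabs (u n - v n) <= w n) -> Un_cv w 0 -> Un_cv v l.
Proof.
  intros hu hb hw e he.
  destruct (hu (e/2)) as [N1 h1]; [lra|]. destruct (hw (e/2)) as [N2 h2]; [lra|].
  exists (Nat.max N1 N2). intros n hn. specialize (h1 n ltac:(lia)). specialize (h2 n ltac:(lia)).
  specialize (hb n). unfold R_dist in *. rewrite Rminus_0_r in h2.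
  pose proof (Rabs_triang (v n - u n) (u n - l)).
  replace (v n - u n + (u n - l)) with (v n - l) in H by ring.
  rewrite Rabs_minus_sym in hb. pose proof (Rle_abs (w n)). lra.
Qed.

Lemma Un_cv_squeeze0 (u v : nat -> R) : (forall n, 0 <= u n <= v n) -> Un_cv v 0 -> Un_cv u 0.
Proof.
  intros hb hv. apply (Un_cv_perturb v u v 0); auto.
  intros n. destruct (hb n). rewrite Rabs_right by lra. lra.
Qed.

Lemma Un_cv_div (u : nat -> R) l c : Un_cv u l -> Un_cv (fun n => u n / c) (l / c).
Proof. intros h. unfold Rdiv. apply CV_mult; auto. apply Un_cv_const. Qed.

Lemma Un_cv_bounds (u : nat -> R) l a b : Un_cv u l -> (forall n, a <= u n <= b) -> a <= l <= b.
Proof.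
  intros hu hb. split.
  - apply (Rle_cv_lim (Un := fun _ => a) (Vn := u)); [apply hb | apply Un_cv_const | exact hu].
  - apply (Rle_cv_lim (Un := u) (Vn := fun _ => b)); [apply hb | exact hu | apply Un_cv_const].
Qed.

Lemma Un_cv_le_eventually (u : nat -> R) l c :
  Un_cv u l -> (exists N, forall n, (N <= n)%nat -> u n <= c) -> l <= c.
Proof.
  intros hu [N hN].
  apply (Rle_cv_lim (Un := fun n => u (n + N)%nat) (Vn := fun _ => c)).
  - intros n. apply hN. lia.
  - apply CV_shift'. exact hu.
  - apply Un_cv_const.
Qed.

Lemma inv_INR_succ_pos (n : nat) : 0 < / (INR n + 1).
Proof. apply Rinv_0_lt_compat. pose proof (pos_INR n). lra. Qed.

Lemma inv_INR_succ_small (e : R) : 0 < e -> exists N, forall n, (N <= n)%nat -> / (INR n + 1) < e.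
Proof.
  intros he. destruct (archimed_cor1 e he) as [N [h1 h2]]. exists N. intros n hn.
  apply le_INR in hn. apply lt_0_INR in h2.
  assert (/ (INR n + 1) <= / INR N) by (apply Rinv_le_contravar; lra). lra.
Qed.

Lemma frequent_value (B : nat) (c : nat -> nat) : (forall j, (c j <= B)%nat) ->
  exists v, forall J, exists j, (J <= j)%nat /\ c j = v.
Proof.
  revert c; induction B as [|B IH]; intros c hc.
  - exists 0%nat. intros J. exists J. split; auto. specialize (hc J). lia.
  - destruct (classic (forall J, exists j, (J <= j)%nat /\ c j = S B)) as [h|h]; [exists (S B); auto|].
    apply not_all_ex_not in h. destruct h as [J0 h].
    destruct (IH (fun j => c (j + J0)%nat)) as [v hv].
    + intros j. destruct (Nat.eq_dec (c (j + J0)%nat) (S B)) as [e|e].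
      * exfalso. apply h. exists (j + J0)%nat. split; [lia|auto].
      * specialize (hc (j + J0)%nat). lia.
    + exists v. intros J. destruct (hv J) as [j [hj1 hj2]].
      exists (j + J0)%nat. split; [lia|auto].
Qed.

Lemma colored_Cauchy_cluster (B : nat) (c : nat -> nat) (f : nat -> R) (a b : R) :
  (forall j, (c j <= B)%nat) -> (forall j, a <= f j <= b) ->
  (forall e, 0 < e -> exists N, forall i j, (N <= i)%nat -> (N <= j)%nat -> c i = c j ->
     Rabs (f i - f j) < e) ->
  exists v t, a <= t <= b /\ (exists j0, c j0 = v) /\
    forall e, 0 < e -> forall J, exists j, (J <= j)%nat /\ c j = v /\ Rabs (f j - t) < e.
Proof.
  intros hc hf hC. destruct (frequent_value B c hc) as [v hv].
  set (h := fun n => epsilon (inhabits 0%nat) (fun j => (n <= j)%nat /\ c j = v)).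
  assert (hs : forall n, (n <= h n)%nat /\ c (h n) = v) by (intros n; apply epsilon_spec, hv).
  assert (hcc : Cauchy_crit (fun n => f (h n))).
  { intros e he. destruct (hC e he) as [N hN]. exists N. intros n m hn hm.
    unfold R_dist. destruct (hs n), (hs m). apply hN; [lia|lia|congruence]. }
  destruct (R_complete _ hcc) as [t ht].
  exists v, t. split; [apply (Un_cv_bounds _ t a b ht); intros; apply hf|].
  split; [exists (h 0%nat); apply hs|].
  intros e he J. destruct (ht e he) as [N hN].
  exists (h (Nat.max N J)). destruct (hs (Nat.max N J)) as [k1 k2].
  split; [lia|]. split; auto. apply hN. lia.
Qed.

Lemma le_diff_of_thirds {T : Type} (onE : T -> Prop) (c : T -> R) (g : T -> T -> R) (b1 b2 : T) :
  (forall x y z, g x z <= g x y + g y z) ->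
  onE b1 -> onE b2 -> c b1 = 1/3 -> c b2 = 2/3 ->
  (forall (j : nat) x y, (j <= 2)%nat -> onE x -> onE y ->
     INR j / 3 <= c x -> c x <= c y -> c y <= (INR j + 1) / 3 -> g x y <= c y - c x) ->
  forall x y, onE x -> onE y -> 0 <= c x -> c x <= c y -> c y <= 1 -> g x y <= c y - c x.
Proof.
  intros tri e1 e2 c1 c2 loc x y ex ey hx hxy hy.
  pose proof (loc 0%nat) as l0. pose proof (loc 1%nat) as l1. pose proof (loc 2%nat) as l2.
  simpl in l0, l1, l2.
  destruct (Rle_lt_dec (c y) (1/3)); [apply l0; auto; lra|].
  destruct (Rle_lt_dec (c x) (2/3)) as [hx2|hx2]; [|apply l2; auto; lra].
  destruct (Rle_lt_dec (c x) (1/3)) as [hx1|hx1].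
  - pose proof (tri x b1 y). pose proof (l0 x b1 ltac:(lia) ex e1 ltac:(lra) ltac:(lra) ltac:(lra)).
    destruct (Rle_lt_dec (c y) (2/3)).
    + pose proof (l1 b1 y ltac:(lia) e1 ey ltac:(lra) ltac:(lra) ltac:(lra)). lra.
    + pose proof (tri b1 b2 y).
      pose proof (l1 b1 b2 ltac:(lia) e1 e2 ltac:(lra) ltac:(lra) ltac:(lra)).
      pose proof (l2 b2 y ltac:(lia) e2 ey ltac:(lra) ltac:(lra) ltac:(lra)). lra.
  - destruct (Rle_lt_dec (c y) (2/3)); [apply l1; auto; lra|].
    pose proof (tri x b2 y).
    pose proof (l1 x b2 ltac:(lia) ex e2 ltac:(lra) ltac:(lra) ltac:(lra)).
    pose proof (l2 b2 y ltac:(lia) e2 ey ltac:(lra) ltac:(lra) ltac:(lra)). lra.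
Qed.

Definition l1 (a b : R * R) : R := Rabs (fst a - fst b) + Rabs (snd a - snd b).

Lemma l1_triangle a b c : l1 a c <= l1 a b + l1 b c.
Proof.
  unfold l1.
  pose proof (Rabs_triang (fst a - fst b) (fst b - fst c)).
  pose proof (Rabs_triang (snd a - snd b) (snd b - snd c)).
  replace (fst a - fst b + (fst b - fst c)) with (fst a - fst c) in * by ring.
  replace (snd a - snd b + (snd b - snd c)) with (snd a - snd c) in * by ring.
  lra.
Qed.

Lemma l1_ge0 a b : 0 <= l1 a b.
Proof. unfold l1. pose proof (Rabs_pos (fst a - fst b)). pose proof (Rabs_pos (snd a - snd b)). lra. Qed.

Lemma l1_refl a : l1 a a = 0.
Proof. unfold l1. rewrite !Rminus_diag, Rabs_R0. ring. Qed.

Lemma l1_eq0 a b : l1 a b = 0 -> a = b.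
Proof.
  destruct a as [a1 a2], b as [b1 b2]. unfold l1; simpl. intros h.
  unfold Rabs in h. destruct Rcase_abs, Rcase_abs in h; f_equal; lra.
Qed.

Lemma l1_scl (m : nat * nat) a b : l1 (scl m a) (scl m b) = l1 a b / 3.
Proof.
  assert (div3 : forall x y, Rabs (x / 3 - y / 3) = Rabs (x - y) / 3).
  { intros x y. replace (x / 3 - y / 3) with ((x - y) * / 3) by field.
    rewrite Rabs_mult, (Rabs_right (/ 3)) by lra. reflexivity. }
  unfold l1, scl; simpl. rewrite !div3.
  replace (INR (fst m) + fst a - (INR (fst m) + fst b)) with (fst a - fst b) by ring.
  replace (INR (snd m) + snd a - (INR (snd m) + snd b)) with (snd a - snd b) by ring.
  field.
Qed.

Lemma INR_add_unit_eq_cases (a b : nat) (x y : R) : 0 <= x <= 1 -> 0 <= y <= 1 ->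
  INR a + x = INR b + y ->
  (a = b /\ x = y) \/ ((a = S b \/ b = S a) /\ (x = 0 \/ x = 1) /\ (y = 0 \/ y = 1)).
Proof.
  intros hx hy h. destruct (Nat.lt_total a b) as [k|[k|k]].
  - destruct (Nat.eq_dec b (S a)) as [->|k2].
    + rewrite S_INR in h. right. split; [right; auto|]. split; [right|left]; lra.
    + assert (INR (a + 2) <= INR b) by (apply le_INR; lia).
      rewrite plus_INR in H. simpl in H. lra.
  - subst. left. split; auto. lra.
  - destruct (Nat.eq_dec a (S b)) as [->|k2].
    + rewrite S_INR in h. right. split; [left; auto|]. split; [left|right]; lra.
    + assert (INR (b + 2) <= INR a) by (apply le_INR; lia).
      rewrite plus_INR in H. simpl in H. lra.
Qed.

Lemma third_decomposition (x : R) : 0 <= x <= 1 ->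
  exists (j : nat) (x' : R), (j <= 2)%nat /\ 0 <= x' <= 1 /\ (INR j + x') / 3 = x /\
    (x = 0 -> j = 0%nat /\ x' = 0) /\ (x = 1 -> j = 2%nat /\ x' = 1).
Proof.
  intros hx. destruct (Rle_lt_dec x (1/3)) as [h1|h1].
  - exists 0%nat, (3 * x). split; [lia|]. split; [lra|]. split; [simpl; lra|].
    split; intros h; [split; [reflexivity|lra]| exfalso; lra].
  - destruct (Rle_lt_dec x (2/3)) as [h2|h2].
    + exists 1%nat, (3 * x - 1). split; [lia|]. split; [lra|]. split; [simpl; lra|].
      split; intros h; exfalso; lra.
    + exists 2%nat, (3 * x - 2). split; [lia|]. split; [lra|]. split; [simpl; lra|].
      split; intros h; [exfalso; lra| split; [reflexivity|lra]].
Qed.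

Lemma M0_bounds (p : M0) : 0 <= fst (proj1_sig p) <= 1 /\ 0 <= snd (proj1_sig p) <= 1.
Proof. destruct p as [pp hp]; simpl. destruct hp as [h1 [h2 _]]. unfold I01 in *. tauto. Qed.

Lemma inM0_intro x y : 0 <= x <= 1 -> 0 <= y <= 1 -> (x = 0 \/ x = 1 \/ y = 0 \/ y = 1) ->
  inM0 (x, y).
Proof. intros hx hy hb. unfold inM0, I01; simpl. auto. Qed.

Lemma Pel_eq {sh} (m n : Pel sh) : proj1_sig m = proj1_sig n -> m = n.
Proof. apply proj1_sig_inj. Qed.

Definition Pel_code {sh} (m : Pel sh) : nat := (3 * fst (proj1_sig m) + snd (proj1_sig m))%nat.

Lemma Pel_code_inj {sh} (m m' : Pel sh) : Pel_code m = Pel_code m' -> m = m'.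
Proof.
  unfold Pel_code. intros h. apply Pel_eq.
  destruct m as [[a b] hm], m' as [[c d] hm']. simpl in *.
  destruct hm as [h1 [h2 _]], hm' as [k1 [k2 _]]. simpl in *. f_equal; lia.
Qed.

Lemma Pel_code_le8 {sh} (m : Pel sh) : (Pel_code m <= 8)%nat.
Proof. unfold Pel_code. destruct m as [[a b] hm]. simpl in *. destruct hm as [h1 [h2 _]]. simpl in *. lia. Qed.

Lemma scl_bounds {sh} (m : Pel sh) (q : M0) :
  0 <= fst (scl (proj1_sig m) (proj1_sig q)) <= 1 /\ 0 <= snd (scl (proj1_sig m) (proj1_sig q)) <= 1.
Proof.
  destruct m as [[m1 m2] hm]. simpl. destruct hm as [h1 [h2 _]]. simpl in *. unfold scl; simpl.
  destruct (M0_bounds q).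
  apply le_INR in h1, h2. pose proof (pos_INR m1). pose proof (pos_INR m2).
  simpl in h1, h2. split; split; lra.
Qed.

Lemma l1_scl_le2 {sh} (m n : Pel sh) (p q : M0) :
  l1 (scl (proj1_sig m) (proj1_sig p)) (scl (proj1_sig n) (proj1_sig q)) <= 2.
Proof.
  destruct (scl_bounds m p), (scl_bounds n q). unfold l1.
  unfold Rabs; repeat destruct Rcase_abs; lra.
Qed.

Definition side (q : M0) : nat :=
  if Req_EM_T (fst (proj1_sig q)) 0 then 0%nat else
  if Req_EM_T (fst (proj1_sig q)) 1 then 1%nat else
  if Req_EM_T (snd (proj1_sig q)) 0 then 2%nat else 3%nat.

Definition par (q : M0) : R :=
  if Nat.leb (side q) 1 then snd (proj1_sig q) else fst (proj1_sig q).

Lemma side_cases (q : M0) :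
  (side q = 0%nat /\ fst (proj1_sig q) = 0 /\ par q = snd (proj1_sig q)) \/
  (side q = 1%nat /\ fst (proj1_sig q) = 1 /\ par q = snd (proj1_sig q)) \/
  (side q = 2%nat /\ snd (proj1_sig q) = 0 /\ par q = fst (proj1_sig q)) \/
  (side q = 3%nat /\ snd (proj1_sig q) = 1 /\ par q = fst (proj1_sig q)).
Proof.
  unfold par, side. destruct q as [[x y] hq]; simpl. destruct hq as [_ [_ hb]]; simpl in hb.
  destruct (Req_EM_T x 0); [left; simpl; repeat split; auto|].
  destruct (Req_EM_T x 1); [right; left; simpl; repeat split; auto|].
  destruct (Req_EM_T y 0); [right; right; left; simpl; repeat split; auto|].
  right; right; right. simpl. repeat split; auto. destruct hb as [h|[h|[h|h]]]; tauto.
Qed.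

Lemma side_le3 (q : M0) : (side q <= 3)%nat.
Proof. unfold side. repeat destruct Req_EM_T; lia. Qed.

Lemma par_bounds (q : M0) : 0 <= par q <= 1.
Proof.
  destruct (M0_bounds q).
  destruct (side_cases q) as [(s1&f1&p1)|[(s1&f1&p1)|[(s1&f1&p1)|(s1&f1&p1)]]]; rewrite p1; auto.
Qed.

Lemma par_dist_le_l1 (q q' : M0) : side q = side q' ->
  Rabs (par q - par q') <= l1 (proj1_sig q) (proj1_sig q').
Proof.
  intros hs. unfold l1.
  pose proof (Rabs_pos (fst (proj1_sig q) - fst (proj1_sig q'))).
  pose proof (Rabs_pos (snd (proj1_sig q) - snd (proj1_sig q'))).
  destruct (side_cases q) as [(s1&f1&p1)|[(s1&f1&p1)|[(s1&f1&p1)|(s1&f1&p1)]]];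
  destruct (side_cases q') as [(s2&f2&p2)|[(s2&f2&p2)|[(s2&f2&p2)|(s2&f2&p2)]]];
  try (exfalso; congruence); rewrite p1, p2; lra.
Qed.

Section SquareMetric.
Context {X : SqData} (HX : isSquaMS X).

Lemma sd_ge0 x y : 0 <= sd X x y.
Proof. destruct HX as (h&_); apply h. Qed.
Lemma sd_eq0 x y : sd X x y = 0 -> x = y.
Proof. destruct HX as (_&h&_); apply h. Qed.
Lemma sd_refl x : sd X x x = 0.
Proof. destruct HX as (_&h&_); apply h; reflexivity. Qed.
Lemma sd_sym x y : sd X x y = sd X y x.
Proof. destruct HX as (_&_&h&_); apply h. Qed.
Lemma sd_triangle x y z : sd X x z <= sd X x y + sd X y z.
Proof. destruct HX as (_&_&_&h&_); apply h. Qed.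
Lemma sd_le2 x y : sd X x y <= 2.
Proof. destruct HX as (_&_&_&_&h&_); apply h. Qed.
Lemma sS_inj p q : sS X p = sS X q -> p = q.
Proof. destruct HX as (_&_&_&_&_&h&_); apply h. Qed.
Lemma sq1_fst (p q : M0) : fst (proj1_sig p) = fst (proj1_sig q) ->
  (fst (proj1_sig p) = 0 \/ fst (proj1_sig p) = 1) ->
  sd X (sS X p) (sS X q) = Rabs (snd (proj1_sig q) - snd (proj1_sig p)).
Proof. destruct HX as (_&_&_&_&_&_&h&_); apply h. Qed.
Lemma sq1_snd (p q : M0) : snd (proj1_sig p) = snd (proj1_sig q) ->
  (snd (proj1_sig p) = 0 \/ snd (proj1_sig p) = 1) ->
  sd X (sS X p) (sS X q) = Rabs (fst (proj1_sig q) - fst (proj1_sig p)).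
Proof. destruct HX as (_&_&_&_&_&_&_&h&_); apply h. Qed.
Lemma sq2_l1 (p q : M0) : l1 (proj1_sig p) (proj1_sig q) <= sd X (sS X p) (sS X q).
Proof. destruct HX as (_&_&_&_&_&_&_&_&h); apply h. Qed.

Lemma sd_diff_le (a b a' b' : X) : Rabs (sd X a b - sd X a' b') <= sd X a a' + sd X b b'.
Proof.
  pose proof (sd_triangle a a' b). pose proof (sd_triangle a' b' b).
  pose proof (sd_triangle a' a b'). pose proof (sd_triangle a b b').
  rewrite (sd_sym b' b) in *. rewrite (sd_sym a' a) in *.
  unfold Rabs; destruct Rcase_abs; lra.
Qed.

Lemma sd_sS_same_side (q q' : M0) : side q = side q' ->
  sd X (sS X q) (sS X q') = Rabs (par q' - par q).
Proof.
  intros hs.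
  destruct (side_cases q) as [(s1&f1&p1)|[(s1&f1&p1)|[(s1&f1&p1)|(s1&f1&p1)]]];
  destruct (side_cases q') as [(s2&f2&p2)|[(s2&f2&p2)|[(s2&f2&p2)|(s2&f2&p2)]]];
  try (exfalso; congruence); rewrite p1, p2.
  - apply sq1_fst; [congruence| left; auto].
  - apply sq1_fst; [congruence| right; auto].
  - apply sq1_snd; [congruence| left; auto].
  - apply sq1_snd; [congruence| right; auto].
Qed.

Lemma side_point_exists (v : nat) (t : R) : (v <= 3)%nat -> 0 <= t <= 1 ->
  exists qs : M0, forall q : M0, side q = v -> sd X (sS X q) (sS X qs) = Rabs (t - par q).
Proof.
  intros hv ht.
  destruct v as [|[|[|[|v]]]]; [| | | |lia];
  [ assert (h : inM0 (0, t)) by (apply inM0_intro; [lra|lra|tauto])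
  | assert (h : inM0 (1, t)) by (apply inM0_intro; [lra|lra|tauto])
  | assert (h : inM0 (t, 0)) by (apply inM0_intro; [lra|lra|tauto])
  | assert (h : inM0 (t, 1)) by (apply inM0_intro; [lra|lra|tauto]) ];
  exists (exist _ _ h); intros q hq;
  destruct (side_cases q) as [(s1&f1&p1)|[(s1&f1&p1)|[(s1&f1&p1)|(s1&f1&p1)]]];
  try (exfalso; congruence); rewrite p1;
  [apply sq1_fst | apply sq1_fst | apply sq1_snd | apply sq1_snd]; simpl; auto.
Qed.

(* By (sq1) each side of the square is an isometric copy of [0, 1], so the
   boundary S_X(M0) is compact, hence closed. *)
Lemma sS_closed (u : X) : (forall e, 0 < e -> exists q, sd X u (sS X q) < e) -> exists q, u = sS X q.
Proof.
  intros H.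
  set (qn := fun n : nat => epsilon (inhabits m00) (fun q => sd X u (sS X q) < / (INR n + 1))).
  assert (hq : forall n, sd X u (sS X (qn n)) < / (INR n + 1)).
  { intros n. unfold qn. apply epsilon_spec. apply H. apply inv_INR_succ_pos. }
  destruct (colored_Cauchy_cluster 3 (fun n => side (qn n)) (fun n => par (qn n)) 0 1)
    as (v&t&ht&[j0 hj0]&hcl).
  - intros j. apply side_le3.
  - intros j. apply par_bounds.
  - intros e he. destruct (inv_INR_succ_small (e/2)) as [N hN]; [lra|].
    exists N. intros i j hi hj hs.
    rewrite Rabs_minus_sym, <- (sd_sS_same_side (qn i) (qn j) hs).
    pose proof (sd_triangle (sS X (qn i)) u (sS X (qn j))). rewrite (sd_sym _ u) in H0.
    pose proof (hq i). pose proof (hq j). pose proof (hN i hi). pose proof (hN j hj). lra.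
  - assert (hv : (v <= 3)%nat) by (rewrite <- hj0; apply side_le3).
    destruct (side_point_exists v t hv ht) as [qs hqs]. exists qs. apply sd_eq0.
    apply Rle_antisym; [|apply sd_ge0]. apply Rle_plus_epsilon. intros e he. rewrite Rplus_0_l.
    destruct (inv_INR_succ_small (e/2)) as [N hN]; [lra|].
    destruct (hcl (e/2) ltac:(lra) N) as (j&hj&hsj&hpj).
    pose proof (hqs (qn j) hsj). pose proof (sd_triangle u (sS X (qn j)) (sS X qs)).
    pose proof (hq j). pose proof (hN j hj). rewrite Rabs_minus_sym in H0. lra.
Qed.

End SquareMetric.

Section Tensor.
Context {sh : shape} {X : SqData} (HX : isSquaMS X).
Notation E := (TE sh X).

Lemma bd_cases (a b : E) :
  (fst a = fst b /\ bd a b = sd X (snd a) (snd b) / 3) \/ (fst a <> fst b /\ bd a b = 2).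
Proof.
  destruct a as [m u], b as [n v]; unfold bd; simpl.
  destruct (Nat.eqb (fst (proj1_sig m)) (fst (proj1_sig n))) eqn:E1;
  destruct (Nat.eqb (snd (proj1_sig m)) (snd (proj1_sig n))) eqn:E2; simpl.
  - left. split; auto. apply Pel_eq. apply Nat.eqb_eq in E1, E2.
    apply injective_projections; auto.
  - right. split; auto. intros ->. rewrite Nat.eqb_refl in E2. discriminate.
  - right. split; auto. intros ->. rewrite Nat.eqb_refl in E1. discriminate.
  - right. split; auto. intros ->. rewrite Nat.eqb_refl in E1. discriminate.
Qed.

Lemma bd_ge0 (a b : E) : 0 <= bd a b.
Proof.
  destruct (bd_cases a b) as [[_ h]|[_ h]]; rewrite h; [|lra].
  pose proof (sd_ge0 HX (snd a) (snd b)); lra.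
Qed.

Lemma bd_le2 (a b : E) : bd a b <= 2.
Proof.
  destruct (bd_cases a b) as [[_ h]|[_ h]]; rewrite h; [|lra].
  pose proof (sd_le2 HX (snd a) (snd b)); lra.
Qed.

Lemma bd_refl (a : E) : bd a a = 0.
Proof. destruct (bd_cases a a) as [[_ h]|[h _]]; [rewrite h, (sd_refl HX); lra | congruence]. Qed.

Lemma bd_sym (a b : E) : bd a b = bd b a.
Proof.
  destruct (bd_cases a b) as [[e1 h1]|[n1 h1]]; destruct (bd_cases b a) as [[e2 h2]|[n2 h2]];
  rewrite h1, h2; try congruence. rewrite (sd_sym HX). reflexivity.
Qed.

Lemma bd_triangle (a b c : E) : bd a c <= bd a b + bd b c.
Proof.
  pose proof (bd_le2 a c). pose proof (bd_ge0 a b). pose proof (bd_ge0 b c).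
  destruct (bd_cases a b) as [[e1 h1]|[_ h1]]; [|lra].
  destruct (bd_cases b c) as [[e2 h2]|[_ h2]]; [|lra].
  destruct (bd_cases a c) as [[e3 h3]|[n3 h3]]; [|exfalso; congruence].
  rewrite h1, h2, h3. pose proof (sd_triangle HX (snd a) (snd b) (snd c)). lra.
Qed.

Definition glued (e e' : E) : Prop :=
  exists q q', snd e = sS X q /\ snd e' = sS X q' /\
    scl (proj1_sig (fst e)) (proj1_sig q) = scl (proj1_sig (fst e')) (proj1_sig q').

Lemma tsim_eq_or_glued {e e' : E} : tsim e e' -> e = e' \/ glued e e'.
Proof.
  intros H; induction H as [x y Hg| x | x y _ IH | x y z _ IH1 _ IH2].
  - right. destruct Hg as (p&q&h1&h2&_&h3). exists p, q; auto.
  - left; auto.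
  - destruct IH as [<-|(q&q'&h1&h2&h3)]; [left; auto| right; exists q', q; auto].
  - destruct IH1 as [<-|(q1&q1'&h1&h2&h3)]; [exact IH2|].
    destruct IH2 as [<-|(q2&q2'&k1&k2&k3)]; [right; exists q1, q1'; auto|].
    right. exists q1, q2'. repeat split; auto.
    rewrite h2 in k1. apply (sS_inj HX) in k1. subst. congruence.
Qed.

Lemma tsim_sS_transport (a a' : E) qa : tsim a a' -> snd a = sS X qa ->
  exists qa', snd a' = sS X qa' /\
    scl (proj1_sig (fst a')) (proj1_sig qa') = scl (proj1_sig (fst a)) (proj1_sig qa).
Proof.
  intros h k. destruct (tsim_eq_or_glued h) as [<-|(q&q'&h1&h2&h3)].
  - exists qa; auto.
  - exists q'. rewrite k in h1. apply (sS_inj HX) in h1. subst. auto.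
Qed.

Lemma chain_cost_ge0 (l : list (E * E)) : 0 <= chain_cost l.
Proof. induction l as [|[p q] l IH]; simpl; [lra|]. pose proof (bd_ge0 p q). lra. Qed.

Lemma chain_ok_tsim_l {a a' : E} {l b} : tsim a a' -> chain_ok a' l b -> chain_ok a l b.
Proof.
  destruct l as [|[p q] l]; simpl; intros h1 h2.
  - eapply rst_trans; eauto.
  - destruct h2; split; auto. eapply rst_trans; eauto.
Qed.

Lemma chain_ok_tsim_r {a : E} {l b b'} : chain_ok a l b -> tsim b b' -> chain_ok a l b'.
Proof.
  revert a; induction l as [|[p q] l IH]; simpl; intros a h1 h2.
  - eapply rst_trans; eauto.
  - destruct h1; split; auto.
Qed.

Lemma chain_ok_app {a : E} {l1 b l2 c} :
  chain_ok a l1 b -> chain_ok b l2 c -> chain_ok a (l1 ++ l2) c.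
Proof.
  revert a; induction l1 as [|[p q] l IH]; simpl; intros a h1 h2.
  - eapply chain_ok_tsim_l; eauto.
  - destruct h1; split; auto.
Qed.

Lemma chain_cost_app (l1 l2 : list (E * E)) : chain_cost (l1 ++ l2) = chain_cost l1 + chain_cost l2.
Proof. induction l1 as [|[p q] l IH]; simpl; [ring| rewrite IH; ring]. Qed.

Definition rev_chain (l : list (E * E)) := rev (map (fun pq => (snd pq, fst pq)) l).

Lemma chain_ok_rev {a : E} {l b} : chain_ok a l b -> chain_ok b (rev_chain l) a.
Proof.
  revert a; induction l as [|[p q] l IH]; simpl; intros a h.
  - apply rst_sym; auto.
  - destruct h as [h1 h2]. unfold rev_chain; simpl. fold (rev_chain l).
    eapply chain_ok_app; [apply IH; exact h2|]. simpl. split; [apply rst_refl| apply rst_sym; auto].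
Qed.

Lemma chain_cost_rev (l : list (E * E)) : chain_cost (rev_chain l) = chain_cost l.
Proof.
  induction l as [|[p q] l IH]; simpl; [reflexivity|].
  unfold rev_chain; simpl; fold (rev_chain l). rewrite chain_cost_app, IH; simpl. rewrite bd_sym. ring.
Qed.

Lemma tcls_tsim {a b : E} : tsim a b -> tcls a = tcls b.
Proof.
  intros h. apply proj1_sig_inj; simpl. extensionality x. apply propositional_extensionality.
  split; intro k.
  - apply rst_trans with a; [apply rst_sym|]; auto.
  - eapply rst_trans; eauto.
Qed.

Lemma tcls_surj (A : tcar sh X) : exists a, A = tcls a.
Proof. destruct A as [A [a HA]]; exists a; apply proj1_sig_inj; simpl; exact HA. Qed.

Lemma tcar_mem_tsim {A : tcar sh X} {a b} : proj1_sig A a -> proj1_sig A b -> tsim a b.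
Proof.
  destruct (tcls_surj A) as [a0 ->]. simpl. intros h1 h2.
  apply rst_trans with a0; [apply rst_sym|]; auto.
Qed.

Lemma tcls_mem (a : E) : proj1_sig (tcls a) a.
Proof. simpl. apply rst_refl. Qed.

Definition trep (A : tcar sh X) : E :=
  epsilon (inhabits (pel00 sh, sS X m00)) (fun a => proj1_sig A a).

Lemma trep_mem (A : tcar sh X) : proj1_sig A (trep A).
Proof. unfold trep. apply epsilon_spec. destruct (tcls_surj A) as [a ->]. exists a. apply tcls_mem. Qed.

Lemma tcls_trep (A : tcar sh X) : A = tcls (trep A).
Proof. destruct (tcls_surj A) as [a ->]. apply tcls_tsim. apply (trep_mem (tcls a)). Qed.

Lemma tdist_glb (A B : tcar sh X) :
  is_glb_R (fun r => exists a b l, proj1_sig A a /\ proj1_sig B b /\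
                                   chain_ok a l b /\ r = chain_cost l) (tdist A B).
Proof.
  apply Rinf_glb.
  - destruct (tcls_surj A) as [a0 ->], (tcls_surj B) as [b0 ->].
    exists (chain_cost [(a0, b0)]), a0, b0, [(a0, b0)]. simpl.
    repeat split; apply rst_refl.
  - exists 0. intros r (a&b&l&_&_&_&->). apply chain_cost_ge0.
Qed.

Lemma tdist_le_chain_cost {A B : tcar sh X} {a b l} :
  proj1_sig A a -> proj1_sig B b -> chain_ok a l b -> tdist A B <= chain_cost l.
Proof. intros h1 h2 h3. apply (proj1 (tdist_glb A B)). exists a, b, l; auto. Qed.

Lemma le_tdist (A B : tcar sh X) r :
  (forall a b l, proj1_sig A a -> proj1_sig B b -> chain_ok a l b -> r <= chain_cost l) ->
  r <= tdist A B.
Proof. intros h. apply (proj2 (tdist_glb A B)). intros x (a&b&l&h1&h2&h3&->). eauto. Qed.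

Lemma tdist_approx (A B : tcar sh X) e : 0 < e ->
  exists a b l, proj1_sig A a /\ proj1_sig B b /\ chain_ok a l b /\ chain_cost l < tdist A B + e.
Proof.
  intros he. apply NNPP; intro hn.
  assert (tdist A B + e <= tdist A B); [|lra].
  apply le_tdist. intros a b l h1 h2 h3. apply Rnot_lt_le. intro k. apply hn.
  exists a, b, l; auto.
Qed.

Lemma tdist_tcls_le_bd (a b : E) : tdist (tcls a) (tcls b) <= bd a b.
Proof.
  assert (H : tdist (tcls a) (tcls b) <= chain_cost [(a, b)]).
  { eapply tdist_le_chain_cost; [apply tcls_mem | apply tcls_mem | simpl; split; apply rst_refl]. }
  simpl in H. lra.
Qed.

Lemma tdist_same_cell (m : Pel sh) (u v : X) : tdist (tcls (m, u)) (tcls (m, v)) <= sd X u v / 3.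
Proof.
  pose proof (tdist_tcls_le_bd (m, u) (m, v)).
  destruct (bd_cases (m, u) (m, v)) as [[_ k]|[k _]]; [simpl in k; lra| simpl in k; congruence].
Qed.

Lemma tdist_trep_same_cell (A : tcar sh X) (u : X) :
  tdist A (tcls (fst (trep A), u)) <= sd X (snd (trep A)) u / 3.
Proof.
  rewrite (tcls_trep A) at 1. destruct (trep A) as [m v]. apply tdist_same_cell.
Qed.

Lemma tdist_ge0 (A B : tcar sh X) : 0 <= tdist A B.
Proof. apply le_tdist. intros; apply chain_cost_ge0. Qed.

Lemma tdist_sym (A B : tcar sh X) : tdist A B = tdist B A.
Proof.
  assert (forall A B : tcar sh X, tdist A B <= tdist B A).
  { intros A0 B0. apply le_tdist. intros b a l h1 h2 h3.
    rewrite <- chain_cost_rev. eapply tdist_le_chain_cost; eauto. apply chain_ok_rev; auto. }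
  apply Rle_antisym; auto.
Qed.

Lemma tdist_triangle (A B C : tcar sh X) : tdist A C <= tdist A B + tdist B C.
Proof.
  apply Rle_plus_epsilon. intros e he.
  destruct (tdist_approx A B (e/2)) as (a&b&l1&h1&h2&h3&h4); [lra|].
  destruct (tdist_approx B C (e/2)) as (b'&c&l2&k1&k2&k3&k4); [lra|].
  assert (tdist A C <= chain_cost (l1 ++ l2)).
  { eapply tdist_le_chain_cost; eauto. eapply chain_ok_app; [|exact k3].
    eapply chain_ok_tsim_r; eauto. eapply tcar_mem_tsim; eauto. }
  rewrite chain_cost_app in H. lra.
Qed.

Lemma tdist_le2 (A B : tcar sh X) : tdist A B <= 2.
Proof.
  destruct (tcls_surj A) as [a ->], (tcls_surj B) as [b ->].
  pose proof (tdist_tcls_le_bd a b). pose proof (bd_le2 a b). lra.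
Qed.

Lemma chain_cost_ge_bd_or_boundary (l : list (E * E)) : forall a b : E, chain_ok a l b ->
  bd a b <= chain_cost l \/
  exists q1 q2, sd X (snd a) (sS X q1) / 3 + sd X (snd b) (sS X q2) / 3 <= chain_cost l.
Proof.
  induction l as [|[p r] l IH]; intros a b h; simpl in *.
  - destruct (tsim_eq_or_glued h) as [<-|(q&q'&h1&h2&_)].
    + left. rewrite bd_refl. lra.
    + right. exists q, q'. rewrite h1, h2, !(sd_refl HX). lra.
  - destruct h as [h1 h2]. specialize (IH r b h2).
    pose proof (chain_cost_ge0 l). pose proof (bd_ge0 p r).
    destruct (tsim_eq_or_glued h1) as [<-|(qa&qp&ka&kp&ks)].
    + destruct IH as [IH|(q1&q2&IH)].
      * left. pose proof (bd_triangle a r b). lra.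
      * destruct (bd_cases a r) as [[e1 k1]|[_ k1]].
        -- right. exists q1, q2. pose proof (sd_triangle HX (snd a) (snd r) (sS X q1)). lra.
        -- left. pose proof (bd_le2 a b). lra.
    + destruct IH as [IH|(q1&q2&IH)].
      * destruct (bd_cases p b) as [[e1 k1]|[_ k1]].
        -- right. exists qa, qp. rewrite ka, (sd_refl HX), (sd_sym HX (snd b)), <- kp.
           pose proof (bd_triangle p r b). lra.
        -- left. pose proof (bd_triangle p r b). pose proof (bd_le2 a b). lra.
      * right. exists qa, q2. rewrite ka, (sd_refl HX).
        pose proof (sd_ge0 HX (snd r) (sS X q1)). lra.
Qed.

Lemma chain_cost_to_boundary (n : Pel sh) (qb : M0) (l : list (E * E)) : forall e : E,
  chain_ok e l (n, sS X qb) ->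
  2 <= chain_cost l \/
  exists q, sd X (snd e) (sS X q) / 3 +
            l1 (scl (proj1_sig (fst e)) (proj1_sig q)) (scl (proj1_sig n) (proj1_sig qb))
            <= chain_cost l.
Proof.
  induction l as [|[p r] l IH]; intros e h; simpl in *.
  - destruct (tsim_eq_or_glued h) as [->|(q&q'&h1&h2&h3)].
    + right. exists qb. simpl. rewrite (sd_refl HX), l1_refl. lra.
    + right. exists q. simpl in h2. apply (sS_inj HX) in h2. subst q'.
      rewrite h1, (sd_refl HX), h3, l1_refl. lra.
  - destruct h as [h1 h2]. specialize (IH r h2).
    pose proof (chain_cost_ge0 l). pose proof (bd_ge0 p r).
    destruct IH as [IH|(q&IH)]; [left; lra|].
    destruct (bd_cases p r) as [[e1 k1]|[_ k1]]; [|left; lra].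
    rewrite <- e1 in IH.
    pose proof (sd_triangle HX (snd p) (snd r) (sS X q)).
    destruct (tsim_eq_or_glued h1) as [<-|(qe&qp&ke&kp&ks)].
    + right. exists q. lra.
    + right. exists qe. rewrite ke, (sd_refl HX), ks.
      pose proof (l1_triangle (scl (proj1_sig (fst p)) (proj1_sig qp))
                    (scl (proj1_sig (fst p)) (proj1_sig q)) (scl (proj1_sig n) (proj1_sig qb))).
      rewrite l1_scl in H2. pose proof (sq2_l1 HX qp q). rewrite <- kp in H3. lra.
Qed.

Lemma l1_scl_le_tdist (a b : E) qa qb : snd a = sS X qa -> snd b = sS X qb ->
  l1 (scl (proj1_sig (fst a)) (proj1_sig qa)) (scl (proj1_sig (fst b)) (proj1_sig qb))
  <= tdist (tcls a) (tcls b).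
Proof.
  intros ka kb. apply le_tdist. intros a' b' l ha hb hc. simpl in ha, hb.
  destruct (tsim_sS_transport a a' qa ha ka) as (qa'&ka'&sa').
  destruct (tsim_sS_transport b b' qb hb kb) as (qb'&kb'&sb').
  destruct b' as [n' v]; simpl in kb', sb'. subst v.
  destruct (chain_cost_to_boundary n' qb' l a' hc) as [hc'|(q&hq)].
  - pose proof (l1_scl_le2 (fst a) (fst b) qa qb). lra.
  - rewrite <- sa', <- sb'. rewrite ka' in hq.
    pose proof (l1_triangle (scl (proj1_sig (fst a')) (proj1_sig qa'))
                  (scl (proj1_sig (fst a')) (proj1_sig q)) (scl (proj1_sig n') (proj1_sig qb'))).
    rewrite l1_scl in H. pose proof (sq2_l1 HX qa' q). lra.
Qed.

Lemma tsim_adjacent (m n : Pel sh) (p q : M0) : adjacent (proj1_sig m) (proj1_sig n) ->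
  scl (proj1_sig m) (proj1_sig p) = scl (proj1_sig n) (proj1_sig q) ->
  tsim (m, sS X p) (n, sS X q).
Proof. intros h1 h2. apply rst_step. exists p, q. simpl. auto. Qed.

(* Two cells sharing only a corner are joined through one of the two cells
   adjacent to both; in M at most one of these is the missing centre cell. *)
Lemma tsim_of_scl_eq (m n : Pel sh) (p q : M0) :
  scl (proj1_sig m) (proj1_sig p) = scl (proj1_sig n) (proj1_sig q) -> tsim (m, sS X p) (n, sS X q).
Proof.
  intros H.
  destruct (M0_bounds p) as [bp1 bp2], (M0_bounds q) as [bq1 bq2].
  destruct m as [[m1 m2] hm], n as [[n1 n2] hn], p as [[p1 p2] hp], q as [[q1 q2] hq].
  simpl in *. unfold scl in H; simpl in H. injection H as H1 H2.
  assert (E1 : INR m1 + p1 = INR n1 + q1) by lra.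
  assert (E2 : INR m2 + p2 = INR n2 + q2) by lra.
  destruct (INR_add_unit_eq_cases m1 n1 p1 q1 bp1 bq1 E1) as [[c1 d1]|[c1 [d1 d1']]];
  destruct (INR_add_unit_eq_cases m2 n2 p2 q2 bp2 bq2 E2) as [[c2 d2]|[c2 [d2 d2']]].
  - subst. assert (hn = hm) by apply proof_irrelevance.
    assert (hq = hp) by apply proof_irrelevance. subst. apply rst_refl.
  - apply tsim_adjacent; [right; simpl; split; auto | unfold scl; simpl; f_equal; lra].
  - apply tsim_adjacent; [left; simpl; split; auto | unfold scl; simpl; f_equal; lra].
  - assert (Hc : inP sh (n1, m2) \/ inP sh (m1, n2)).
    { unfold inP in *; simpl in *. destruct hm as (hm1&hm2&hm3), hn as (hn1&hn2&hn3).
      destruct (classic ((n1, m2) = (1, 1)%nat)) as [e|e].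
      - right. repeat split; auto. intros _ e'. injection e as e1 e2. injection e' as e3 e4. lia.
      - left. repeat split; auto. }
    assert (Hr1 : inM0 (q1, p2)).
    { apply inM0_intro; [lra|lra|]. destruct d1' as [->| ->]; auto. }
    assert (Hr2 : inM0 (p1, q2)).
    { apply inM0_intro; [lra|lra|]. destruct d1 as [->| ->]; auto. }
    destruct Hc as [Hc|Hc].
    + apply rst_trans with (exist _ (n1, m2) Hc, sS X (exist _ (q1, p2) Hr1)).
      * apply tsim_adjacent; [left; simpl; split; auto | unfold scl; simpl; f_equal; lra].
      * apply tsim_adjacent; [right; simpl; split; auto | unfold scl; simpl; f_equal; lra].
    + apply rst_trans with (exist _ (m1, n2) Hc, sS X (exist _ (p1, q2) Hr2)).
      * apply tsim_adjacent; [right; simpl; split; auto | unfold scl; simpl; f_equal; lra].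
      * apply tsim_adjacent; [left; simpl; split; auto | unfold scl; simpl; f_equal; lra].
Qed.

(* A chain shorter than a third of the distance from [a] to the boundary cannot
   leave the cell of [a]. *)
Lemma bd_le_tdist_off_boundary (a b : E) e0 : (forall q, e0 <= sd X (snd a) (sS X q)) ->
  tdist (tcls a) (tcls b) < e0 / 3 -> bd a b <= tdist (tcls a) (tcls b).
Proof.
  intros ha hd. pose proof (tdist_ge0 (tcls a) (tcls b)).
  apply Rle_plus_epsilon. intros h hh.
  set (h' := Rmin h (e0/3 - tdist (tcls a) (tcls b))).
  assert (hp : 0 < h') by (apply Rmin_glb_lt; lra).
  pose proof (Rmin_l h (e0/3 - tdist (tcls a) (tcls b))).
  pose proof (Rmin_r h (e0/3 - tdist (tcls a) (tcls b))). fold h' in H0, H1.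
  destruct (tdist_approx (tcls a) (tcls b) h' hp) as (a'&b'&l&k1&k2&k3&k4). simpl in k1, k2.
  destruct (tsim_eq_or_glued k1) as [<-|(q&q'&g1&_)].
  2: { pose proof (ha q). rewrite g1, (sd_refl HX) in H2. lra. }
  destruct (chain_cost_ge_bd_or_boundary l a b' k3) as [k|(q1&q2&k)].
  2: { pose proof (ha q1). pose proof (sd_ge0 HX (snd b') (sS X q2)). lra. }
  destruct (tsim_eq_or_glued k2) as [<-|(q&q'&g1&g2&_)]; [lra|].
  destruct (bd_cases a b') as [[_ k5]|[_ k5]]; [|pose proof (sd_le2 HX (snd a) (sS X m00)); pose proof (ha m00); lra].
  rewrite g2 in k5. pose proof (ha q'). lra.
Qed.

Lemma tdist_eq0_off_boundary (a b : E) : ~ (exists q, snd a = sS X q) ->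
  tdist (tcls a) (tcls b) = 0 -> a = b.
Proof.
  intros ng h0.
  assert (he0 : exists e0, 0 < e0 /\ forall q, e0 <= sd X (snd a) (sS X q)).
  { apply NNPP. intro hn. apply ng. apply (sS_closed HX). intros e he. apply NNPP. intro hq.
    apply hn. exists e. split; auto. intros q. apply Rnot_lt_le. intro k. apply hq. exists q; auto. }
  destruct he0 as [e0 [he0 hq0]].
  pose proof (bd_le_tdist_off_boundary a b e0 hq0 ltac:(lra)) as hb. rewrite h0 in hb.
  destruct (bd_cases a b) as [[e1 k1]|[_ k1]]; [|lra].
  destruct a as [ma ua], b as [mb ub]; simpl in *. subst mb. f_equal. apply (sd_eq0 HX).
  pose proof (sd_ge0 HX ua ub). lra.
Qed.

Lemma tdist_eq0 (A B : tcar sh X) : tdist A B = 0 -> A = B.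
Proof.
  destruct (tcls_surj A) as [a ->], (tcls_surj B) as [b ->]. intros h.
  destruct (classic (exists q, snd a = sS X q)) as [[qa ka]|na].
  - destruct (classic (exists q, snd b = sS X q)) as [[qb kb]|nb].
    + pose proof (l1_scl_le_tdist a b qa qb ka kb) as hL. rewrite h in hL.
      pose proof (l1_ge0 (scl (proj1_sig (fst a)) (proj1_sig qa)) (scl (proj1_sig (fst b)) (proj1_sig qb))).
      destruct a as [ma ua], b as [mb ub]; simpl in *; subst ua ub.
      apply tcls_tsim, tsim_of_scl_eq, l1_eq0. lra.
    + rewrite tdist_sym in h. symmetry. f_equal. apply tdist_eq0_off_boundary; auto.
  - f_equal. apply tdist_eq0_off_boundary; auto.
Qed.

End Tensor.

Section TensorBoundary.
Context {sh : shape} {X : SqData} (HX : isSquaMS X).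

Lemma scl_surj (p : M0) : exists (m : Pel sh) (q : M0), scl (proj1_sig m) (proj1_sig q) = proj1_sig p.
Proof.
  destruct p as [[x y] hp]. simpl. pose proof hp as [hx [hy hb]]. simpl in *. unfold I01 in *.
  destruct (third_decomposition x hx) as (j1&x'&hj1&hx'&ex&zx&ox).
  destruct (third_decomposition y hy) as (j2&y'&hj2&hy'&ey&zy&oy).
  assert (hm : inP sh (j1, j2)).
  { unfold inP; simpl. split; [lia|split;[lia|]]. intros _ e. injection e as e1 e2. subst.
    destruct hb as [h|[h|[h|h]]]; [apply zx in h|apply ox in h|apply zy in h|apply oy in h];
    destruct h as [h _]; discriminate. }
  assert (hq : inM0 (x', y')).
  { apply inM0_intro; [lra|lra|].
    destruct hb as [h|[h|[h|h]]]; [left; apply zx | right; left; apply ox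
                                   | right; right; left; apply zy | right; right; right; apply oy]; auto. }
  exists (exist _ (j1,j2) hm), (exist _ (x',y') hq). unfold scl; simpl. rewrite ex, ey. reflexivity.
Qed.

Lemma tS_eq (p : M0) (m : Pel sh) (q : M0) : scl (proj1_sig m) (proj1_sig q) = proj1_sig p ->
  tS sh X p = tcls (m, sS X q).
Proof.
  intros h. unfold tS.
  assert (hex : exists mq : Pel sh * M0, scl (proj1_sig (fst mq)) (proj1_sig (snd mq)) = proj1_sig p)
    by (destruct (scl_surj p) as (m'&q'&e); exists (m', q'); exact e).
  pose proof (epsilon_spec (inhPM sh) _ hex) as Hs.
  cbv beta in Hs. apply tcls_tsim, tsim_of_scl_eq. rewrite Hs. symmetry. exact h.
Qed.

Lemma l1_le_tdist_tS (p q : M0) : l1 (proj1_sig p) (proj1_sig q) <= tdist (tS sh X p) (tS sh X q).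
Proof.
  destruct (scl_surj p) as (m&a&ha), (scl_surj q) as (n&b&hb).
  rewrite (tS_eq p m a ha), (tS_eq q n b hb), <- ha, <- hb.
  exact (l1_scl_le_tdist HX (m, sS X a) (n, sS X b) a b eq_refl eq_refl).
Qed.

Lemma tS_inj (p q : M0) : tS sh X p = tS sh X q -> p = q.
Proof.
  intros h. pose proof (l1_le_tdist_tS p q) as H. rewrite h, (tdist_refl (sd_ge0 HX)) in H.
  apply proj1_sig_inj, l1_eq0. pose proof (l1_ge0 (proj1_sig p) (proj1_sig q)). lra.
Qed.

Lemma tdist_tS_same_cell (p q : M0) (m : Pel sh) (a b : M0) :
  scl (proj1_sig m) (proj1_sig a) = proj1_sig p -> scl (proj1_sig m) (proj1_sig b) = proj1_sig q ->
  tdist (tS sh X p) (tS sh X q) <= sd X (sS X a) (sS X b) / 3.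
Proof. intros ha hb. rewrite (tS_eq p m a ha), (tS_eq q m b hb). apply (tdist_same_cell HX). Qed.

(* Along a side of the square, a third of that side lies on a side of one
   cell (one not at the centre), where (sq1) in X applies. *)
Lemma tdist_tS_fst_third (p q : M0) (j : nat) : (j <= 2)%nat ->
  fst (proj1_sig p) = fst (proj1_sig q) -> (fst (proj1_sig p) = 0 \/ fst (proj1_sig p) = 1) ->
  INR j / 3 <= snd (proj1_sig p) -> snd (proj1_sig p) <= snd (proj1_sig q) ->
  snd (proj1_sig q) <= (INR j + 1) / 3 ->
  tdist (tS sh X p) (tS sh X q) <= snd (proj1_sig q) - snd (proj1_sig p).
Proof.
  intros hj hf hi hp hpq hq. destruct (M0_bounds p), (M0_bounds q).
  set (P := p). set (Q := q).
  destruct p as [[p1 p2] hp0], q as [[q1 q2] hq0]. simpl in *. subst q1.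
  assert (hci : exists ci : nat, (ci <= 2)%nat /\ ci <> 1%nat /\ (INR ci + p1) / 3 = p1).
  { destruct hi as [h|h]; [exists 0%nat | exists 2%nat]; simpl; rewrite h; repeat split; try lia; lra. }
  destruct hci as (ci & hc1 & hc2 & hc3).
  assert (hm : inP sh (ci, j)).
  { unfold inP; simpl. split; [lia|split;[lia|]]. intros _ e. injection e as e1 e2. lia. }
  assert (ha : inM0 (p1, 3 * p2 - INR j)).
  { apply inM0_intro; [lra|lra|]. destruct hi; auto. }
  assert (hb : inM0 (p1, 3 * q2 - INR j)).
  { apply inM0_intro; [lra|lra|]. destruct hi; auto. }
  eapply Rle_trans.
  - apply (tdist_tS_same_cell P Q (exist _ (ci,j) hm) (exist _ _ ha) (exist _ _ hb));
      unfold P, Q; simpl; apply injective_projections; unfold scl; simpl; lra.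
  - rewrite (sq1_fst HX (exist _ _ ha) (exist _ _ hb)); simpl; auto.
    rewrite Rabs_right; lra.
Qed.

Lemma tdist_tS_snd_third (p q : M0) (j : nat) : (j <= 2)%nat ->
  snd (proj1_sig p) = snd (proj1_sig q) -> (snd (proj1_sig p) = 0 \/ snd (proj1_sig p) = 1) ->
  INR j / 3 <= fst (proj1_sig p) -> fst (proj1_sig p) <= fst (proj1_sig q) ->
  fst (proj1_sig q) <= (INR j + 1) / 3 ->
  tdist (tS sh X p) (tS sh X q) <= fst (proj1_sig q) - fst (proj1_sig p).
Proof.
  intros hj hf hi hp hpq hq. destruct (M0_bounds p), (M0_bounds q).
  set (P := p). set (Q := q).
  destruct p as [[p1 p2] hp0], q as [[q1 q2] hq0]. simpl in *. subst q2.
  assert (hci : exists ci : nat, (ci <= 2)%nat /\ ci <> 1%nat /\ (INR ci + p2) / 3 = p2).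
  { destruct hi as [h|h]; [exists 0%nat | exists 2%nat]; simpl; rewrite h; repeat split; try lia; lra. }
  destruct hci as (ci & hc1 & hc2 & hc3).
  assert (hm : inP sh (j, ci)).
  { unfold inP; simpl. split; [lia|split;[lia|]]. intros _ e. injection e as e1 e2. lia. }
  assert (ha : inM0 (3 * p1 - INR j, p2)).
  { apply inM0_intro; [lra|lra|]. destruct hi; auto. }
  assert (hb : inM0 (3 * q1 - INR j, p2)).
  { apply inM0_intro; [lra|lra|]. destruct hi; auto. }
  eapply Rle_trans.
  - apply (tdist_tS_same_cell P Q (exist _ (j,ci) hm) (exist _ _ ha) (exist _ _ hb));
      unfold P, Q; simpl; apply injective_projections; unfold scl; simpl; lra.
  - rewrite (sq1_snd HX (exist _ _ ha) (exist _ _ hb)); simpl; auto.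
    rewrite Rabs_right; lra.
Qed.

Lemma tdist_tS_fst_side (p q : M0) :
  fst (proj1_sig p) = fst (proj1_sig q) -> (fst (proj1_sig p) = 0 \/ fst (proj1_sig p) = 1) ->
  snd (proj1_sig p) <= snd (proj1_sig q) ->
  tdist (tS sh X p) (tS sh X q) <= snd (proj1_sig q) - snd (proj1_sig p).
Proof.
  intros hf hi hle. destruct (M0_bounds p), (M0_bounds q).
  assert (hb1 : inM0 (fst (proj1_sig p), 1/3)) by (apply inM0_intro; [lra|lra|destruct hi; auto]).
  assert (hb2 : inM0 (fst (proj1_sig p), 2/3)) by (apply inM0_intro; [lra|lra|destruct hi; auto]).
  set (onE := fun x : M0 => fst (proj1_sig x) = fst (proj1_sig p)).
  apply (le_diff_of_thirds onE (fun x => snd (proj1_sig x)) (fun a b => tdist (tS sh X a) (tS sh X b))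
           (exist _ _ hb1) (exist _ _ hb2)); unfold onE; simpl; auto; try lra.
  - intros. apply (tdist_triangle HX).
  - intros j x y hj ex ey. apply tdist_tS_fst_third; [auto | congruence | rewrite ex; auto].
Qed.

Lemma tdist_tS_snd_side (p q : M0) :
  snd (proj1_sig p) = snd (proj1_sig q) -> (snd (proj1_sig p) = 0 \/ snd (proj1_sig p) = 1) ->
  fst (proj1_sig p) <= fst (proj1_sig q) ->
  tdist (tS sh X p) (tS sh X q) <= fst (proj1_sig q) - fst (proj1_sig p).
Proof.
  intros hf hi hle. destruct (M0_bounds p), (M0_bounds q).
  assert (hb1 : inM0 (1/3, snd (proj1_sig p))) by (apply inM0_intro; [lra|lra|destruct hi; auto]).
  assert (hb2 : inM0 (2/3, snd (proj1_sig p))) by (apply inM0_intro; [lra|lra|destruct hi; auto]).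
  set (onE := fun x : M0 => snd (proj1_sig x) = snd (proj1_sig p)).
  apply (le_diff_of_thirds onE (fun x => fst (proj1_sig x)) (fun a b => tdist (tS sh X a) (tS sh X b))
           (exist _ _ hb1) (exist _ _ hb2)); unfold onE; simpl; auto; try lra.
  - intros. apply (tdist_triangle HX).
  - intros j x y hj ex ey. apply tdist_tS_snd_third; [auto | congruence | rewrite ex; auto].
Qed.

Theorem TD_isSquaMS : isSquaMS (TD sh X).
Proof.
  unfold isSquaMS; simpl.
  split; [apply (tdist_ge0 HX)|].
  split; [intros A B; split; [apply (tdist_eq0 HX)| intros ->; apply (tdist_refl (sd_ge0 HX))]|].
  split; [apply (tdist_sym HX)|].
  split; [intros; apply (tdist_triangle HX)|].
  split; [apply (tdist_le2 HX)|].
  split; [apply tS_inj|].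
  split.
  { intros p q h1 h2. pose proof (l1_le_tdist_tS p q) as hs. unfold l1 in hs.
    rewrite h1, Rminus_diag, Rabs_R0, Rplus_0_l, Rabs_minus_sym in hs.
    apply Rle_antisym; [|exact hs].
    destruct (Rle_lt_dec (snd (proj1_sig p)) (snd (proj1_sig q))).
    - rewrite Rabs_right by lra. apply tdist_tS_fst_side; auto.
    - rewrite (tdist_sym HX), Rabs_minus_sym, Rabs_right by lra.
      apply tdist_tS_fst_side; [congruence | rewrite <- h1; auto | lra]. }
  split.
  { intros p q h1 h2. pose proof (l1_le_tdist_tS p q) as hs. unfold l1 in hs.
    rewrite h1, (Rminus_diag (snd (proj1_sig q))), Rabs_R0, Rplus_0_r, Rabs_minus_sym in hs.
    apply Rle_antisym; [|exact hs].
    destruct (Rle_lt_dec (fst (proj1_sig p)) (fst (proj1_sig q))).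
    - rewrite Rabs_right by lra. apply tdist_tS_snd_side; auto.
    - rewrite (tdist_sym HX), Rabs_minus_sym, Rabs_right by lra.
      apply tdist_tS_snd_side; [congruence | rewrite <- h1; auto | lra]. }
  apply l1_le_tdist_tS.
Qed.

End TensorBoundary.

Section Completion.
Context {Y : SqData} (HY : isSquaMS Y).

Lemma cclass_refl (s : nat -> Y) : Cauchy Y s -> cclass Y s s.
Proof.
  intros h. split; auto. unfold cequiv. eapply Un_cv_ext; [|apply Un_cv_const].
  intros n; simpl. rewrite (sd_refl HY). reflexivity.
Qed.

Lemma ccar_mem_Cauchy (A : ccar Y) s : proj1_sig A s -> Cauchy Y s.
Proof. destruct A as [A [s0 [h0 ->]]]. simpl. intros [h _]; auto. Qed.

Lemma ccar_inhabited (A : ccar Y) : exists s, proj1_sig A s.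
Proof. destruct A as [A [s0 [h0 ->]]]. exists s0. simpl. apply cclass_refl; auto. Qed.

Definition crep (A : ccar Y) : nat -> Y :=
  epsilon (inhabits (fun _ => sS Y m00)) (fun s => proj1_sig A s).

Lemma crep_mem (A : ccar Y) : proj1_sig A (crep A).
Proof. unfold crep. apply epsilon_spec. apply ccar_inhabited. Qed.

Lemma cequiv_sym (s t : nat -> Y) : cequiv Y s t -> cequiv Y t s.
Proof. unfold cequiv. intros h. eapply Un_cv_ext; [|exact h]. intros n. simpl. apply (sd_sym HY). Qed.

Lemma cequiv_trans (s t u : nat -> Y) : cequiv Y s t -> cequiv Y t u -> cequiv Y s u.
Proof.
  intros h1 h2. unfold cequiv in *.
  apply (Un_cv_squeeze0 _ (fun n => sd Y (s n) (t n) + sd Y (t n) (u n))).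
  - intros n. split; [apply (sd_ge0 HY)| apply (sd_triangle HY)].
  - replace 0 with (0 + 0) by ring. apply CV_plus; auto.
Qed.

Lemma ccar_mem_cequiv (A : ccar Y) s t : proj1_sig A s -> proj1_sig A t -> cequiv Y s t.
Proof.
  destruct A as [A [s0 [h0 ->]]]. simpl. intros [_ h1] [_ h2].
  eapply cequiv_trans; [apply cequiv_sym|]; eauto.
Qed.

Lemma ccar_mem_of_cequiv (A : ccar Y) s t :
  proj1_sig A s -> Cauchy Y t -> cequiv Y s t -> proj1_sig A t.
Proof.
  destruct A as [A [s0 [h0 ->]]]. simpl. intros [_ h1] h2 h3. split; auto.
  eapply cequiv_trans; eauto.
Qed.

Lemma ccar_eq_of_mem (A B : ccar Y) s : proj1_sig A s -> proj1_sig B s -> A = B.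
Proof.
  intros ha hb. apply proj1_sig_inj. extensionality t. apply propositional_extensionality.
  split; intro h.
  - apply (ccar_mem_of_cequiv B s t hb (ccar_mem_Cauchy A t h) (ccar_mem_cequiv A s t ha h)).
  - apply (ccar_mem_of_cequiv A s t ha (ccar_mem_Cauchy B t h) (ccar_mem_cequiv B s t hb h)).
Qed.

Lemma sd_Cauchy_cv (s t : nat -> Y) : Cauchy Y s -> Cauchy Y t ->
  exists l, Un_cv (fun n => sd Y (s n) (t n)) l.
Proof.
  intros hs ht.
  assert (hc : Cauchy_crit (fun n => sd Y (s n) (t n))).
  { intros e he. destruct (hs (e/2)) as [N1 h1]; [lra|]. destruct (ht (e/2)) as [N2 h2]; [lra|].
    exists (Nat.max N1 N2). intros n m hn hm. unfold R_dist.
    pose proof (sd_diff_le HY (s n) (t n) (s m) (t m)).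
    specialize (h1 n m ltac:(lia) ltac:(lia)). specialize (h2 n m ltac:(lia) ltac:(lia)). lra. }
  destruct (R_complete _ hc) as [l hl]. exists l; auto.
Qed.

Lemma cdist_cv (A B : ccar Y) s t : proj1_sig A s -> proj1_sig B t ->
  Un_cv (fun n => sd Y (s n) (t n)) (cdist A B).
Proof.
  intros hs ht. unfold cdist, Rchoose.
  assert (hex : exists r, exists s t, proj1_sig A s /\ proj1_sig B t /\
                                      Un_cv (fun n => sd Y (s n) (t n)) r).
  { destruct (sd_Cauchy_cv s t (ccar_mem_Cauchy A s hs) (ccar_mem_Cauchy B t ht)) as [l hl].
    exists l, s, t; auto. }
  pose proof (epsilon_spec (inhabits 0) _ hex) as (s'&t'&hs'&ht'&hl).
  apply (Un_cv_perturb _ _ (fun n => sd Y (s' n) (s n) + sd Y (t' n) (t n)) _ hl).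
  - intros n. apply (sd_diff_le HY).
  - replace 0 with (0 + 0) by ring.
    apply CV_plus; [apply (ccar_mem_cequiv A)|apply (ccar_mem_cequiv B)]; auto.
Qed.

Lemma cdist_bounds (A B : ccar Y) : 0 <= cdist A B <= 2.
Proof.
  destruct (ccar_inhabited A) as [s hs], (ccar_inhabited B) as [t ht].
  apply (Un_cv_bounds _ _ 0 2 (cdist_cv A B s t hs ht)).
  intros; split; [apply (sd_ge0 HY) | apply (sd_le2 HY)].
Qed.

Lemma cdist_sym (A B : ccar Y) : cdist A B = cdist B A.
Proof.
  destruct (ccar_inhabited A) as [s hs], (ccar_inhabited B) as [t ht].
  apply (UL_sequence _ _ _ (cdist_cv A B s t hs ht)).
  eapply Un_cv_ext; [|apply (cdist_cv B A t s ht hs)]. intros n; simpl. apply (sd_sym HY).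
Qed.

Lemma cdist_triangle (A B C : ccar Y) : cdist A C <= cdist A B + cdist B C.
Proof.
  destruct (ccar_inhabited A) as [s hs], (ccar_inhabited B) as [t ht], (ccar_inhabited C) as [u hu].
  eapply Rle_cv_lim; [| apply (cdist_cv A C s u hs hu)
                      | apply (CV_plus _ _ _ _ (cdist_cv A B s t hs ht) (cdist_cv B C t u ht hu))].
  intros n. apply (sd_triangle HY).
Qed.

Lemma cdist_refl (A : ccar Y) : cdist A A = 0.
Proof.
  destruct (ccar_inhabited A) as [s hs].
  apply (UL_sequence _ _ _ (cdist_cv A A s s hs hs)).
  eapply Un_cv_ext; [|apply Un_cv_const]. intros n; simpl. symmetry; apply (sd_refl HY).
Qed.

Lemma cdist_eq0 (A B : ccar Y) : cdist A B = 0 -> A = B.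
Proof.
  intros h. destruct (ccar_inhabited A) as [s hs], (ccar_inhabited B) as [t ht].
  pose proof (cdist_cv A B s t hs ht) as hc. rewrite h in hc.
  apply (ccar_eq_of_mem A B t); auto. apply (ccar_mem_of_cequiv A s t hs (ccar_mem_Cauchy B t ht) hc).
Qed.

Lemma cdist_le_of_eventually (A B : ccar Y) s t c : proj1_sig A s -> proj1_sig B t ->
  (exists N, forall n, (N <= n)%nat -> sd Y (s n) (t n) <= c) -> cdist A B <= c.
Proof. intros hs ht. apply Un_cv_le_eventually, cdist_cv; auto. Qed.

Lemma Cauchy_cequiv_of_cluster (u : nat -> Y) (c : Y) : Cauchy Y u ->
  (forall e, 0 < e -> forall K, exists k, (K <= k)%nat /\ sd Y c (u k) < e) ->
  cequiv Y (fun _ => c) u.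
Proof.
  intros hu hc e he. destruct (hu (e/2)) as [N hN]; [lra|].
  destruct (hc (e/2) ltac:(lra) N) as (k&hk&hck).
  exists N. intros n hn. unfold R_dist. rewrite Rminus_0_r.
  pose proof (sd_triangle HY c (u k) (u n)). pose proof (hN k n hk hn). pose proof (sd_ge0 HY c (u n)).
  rewrite Rabs_right; lra.
Qed.

Context (H : forall x : Y, sd Y x x = 0).

Definition cconst (u : Y) : ccar Y :=
  exist _ (cclass Y (fun _ => u)) (ex_intro _ (fun _ => u) (conj (const_Cauchy Y H u) eq_refl)).

Lemma cconst_mem (u : Y) : proj1_sig (cconst u) (fun _ => u).
Proof. simpl. apply cclass_refl. apply const_Cauchy; auto. Qed.

Lemma cS_cconst (p : M0) : cS Y H p = cconst (sS Y p).
Proof. apply proj1_sig_inj. reflexivity. Qed.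

Lemma cS_mem (p : M0) : proj1_sig (cS Y H p) (fun _ => sS Y p).
Proof. rewrite cS_cconst. apply cconst_mem. Qed.

Lemma cdist_cconst (u v : Y) : cdist (cconst u) (cconst v) = sd Y u v.
Proof.
  apply (UL_sequence _ _ _ (cdist_cv (cconst u) (cconst v) _ _ (cconst_mem u) (cconst_mem v))).
  apply Un_cv_const.
Qed.

Lemma cdist_cconst_cv0 (A : ccar Y) s : proj1_sig A s -> Un_cv (fun k => cdist A (cconst (s k))) 0.
Proof.
  intros hs e he. destruct (ccar_mem_Cauchy A s hs (e/2)) as [N hN]; [lra|].
  exists N. intros k hk. unfold R_dist. rewrite Rminus_0_r.
  pose proof (cdist_bounds A (cconst (s k))).
  assert (cdist A (cconst (s k)) <= e/2).
  { apply (cdist_le_of_eventually _ _ s (fun _ => s k) _ hs (cconst_mem (s k))).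
    exists N. intros n hn. left. apply hN; auto. }
  rewrite Rabs_right; lra.
Qed.

Lemma cconst_morph : morph Y (CD Y H) cconst.
Proof.
  split; [intros a b; simpl; rewrite cdist_cconst; lra|].
  intros p. simpl. symmetry. apply cS_cconst.
Qed.

Theorem CD_isSquaMS : isSquaMS (CD Y H).
Proof.
  assert (hS : forall p q, cdist (cS Y H p) (cS Y H q) = sd Y (sS Y p) (sS Y q))
    by (intros; rewrite !cS_cconst; apply cdist_cconst).
  unfold isSquaMS; simpl.
  split; [apply cdist_bounds|].
  split; [intros A B; split; [apply cdist_eq0| intros ->; apply cdist_refl]|].
  split; [apply cdist_sym|].
  split; [intros; apply cdist_triangle|].
  split; [apply cdist_bounds|].
  split; [intros p q h; apply (sS_inj HY), (sd_eq0 HY); rewrite <- hS, h; apply cdist_refl|].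
  split; [intros p q h1 h2; rewrite hS; apply (sq1_fst HY); auto|].
  split; [intros p q h1 h2; rewrite hS; apply (sq1_snd HY); auto|].
  intros p q. rewrite hS. apply (sq2_l1 HY).
Qed.

End Completion.

Section CellMap.
Context {sh : shape} {X Y : SqData} (g : X -> Y).

Definition cellmap (e : TE sh X) : TE sh Y := (fst e, g (snd e)).

Definition cellmap_chain (l : list (TE sh X * TE sh X)) : list (TE sh Y * TE sh Y) :=
  map (fun pq => (cellmap (fst pq), cellmap (snd pq))) l.

Hypothesis g_sS : forall p, g (sS X p) = sS Y p.

Lemma tsim_cellmap (e e' : TE sh X) : tsim e e' -> tsim (cellmap e) (cellmap e').
Proof.
  intros h; induction h as [x y Hg| x | x y _ IH | x y z _ IH1 _ IH2].
  - apply rst_step. destruct Hg as (p&q&h1&h2&h3&h4). exists p, q. unfold cellmap; simpl.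
    rewrite h1, h2, !g_sS. auto.
  - apply rst_refl.
  - apply rst_sym; auto.
  - eapply rst_trans; eauto.
Qed.

Lemma chain_ok_cellmap (l : list (TE sh X * TE sh X)) :
  forall a b, chain_ok a l b -> chain_ok (cellmap a) (cellmap_chain l) (cellmap b).
Proof.
  induction l as [|[p q] l IH]; simpl; intros a b h.
  - apply tsim_cellmap; auto.
  - destruct h. split; [apply tsim_cellmap; auto| apply IH; auto].
Qed.

Lemma chain_cost_cellmap_le : short X Y g ->
  forall l, chain_cost (cellmap_chain l) <= chain_cost l.
Proof.
  intros hg l. induction l as [|[p q] l IH]; simpl; [lra|].
  enough (bd (cellmap p) (cellmap q) <= bd p q) by lra.
  destruct (bd_cases p q) as [[e1 k1]|[n1 k1]];
  destruct (bd_cases (cellmap p) (cellmap q)) as [[e2 k2]|[n2 k2]];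
  rewrite k1, k2; unfold cellmap in *; simpl in *; try lra; try congruence.
  pose proof (hg (snd p) (snd q)). lra.
Qed.

Lemma tdist_cellmap_le (HX : isSquaMS X) (HY : isSquaMS Y) : short X Y g ->
  forall a b, tdist (tcls (cellmap a)) (tcls (cellmap b)) <= tdist (tcls a) (tcls b).
Proof.
  intros hg a b. apply (le_tdist HX). intros a' b' l ha hb hc. simpl in ha, hb.
  eapply Rle_trans; [|apply (chain_cost_cellmap_le hg)].
  apply (tdist_le_chain_cost HY (a := cellmap a') (b := cellmap b')); simpl.
  - apply tsim_cellmap; auto.
  - apply tsim_cellmap; auto.
  - apply chain_ok_cellmap; auto.
Qed.

End CellMap.

Section Comparison.
Context {sh : shape} {X : SqData} (HX : isSquaMS X).
Local Notation HC := (isSquaMS_refl HX).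
Local Notation CX := (CD X (isSquaMS_refl HX)).
Local Notation TX := (TD sh X).
Local Notation ctcls := (@tcls sh CX).
Local Notation HCX := (CD_isSquaMS HX (isSquaMS_refl HX)).
Local Notation HTX := (TD_isSquaMS (sh := sh) HX).

Lemma cell_seq_Cauchy (m : Pel sh) (s : nat -> X) : Cauchy X s -> Cauchy TX (fun k => tcls (m, s k)).
Proof.
  intros hs e he. destruct (hs e he) as [N hN]. exists N. intros n k hn hk. simpl.
  pose proof (tdist_same_cell HX m (s n) (s k)). pose proof (hN n k hn hk).
  pose proof (sd_ge0 HX (s n) (s k)). lra.
Qed.

Lemma cell_seq_cequiv (m : Pel sh) (s t : nat -> X) :
  cequiv X s t -> cequiv TX (fun k => tcls (m, s k)) (fun k => tcls (m, t k)).
Proof.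
  intros h. apply (Un_cv_squeeze0 _ (fun k => sd X (s k) (t k) / 3)).
  - intros k. split; [apply (tdist_ge0 HX) | apply (tdist_same_cell HX)].
  - replace 0 with (0 / 3) by field. apply Un_cv_div. exact h.
Qed.

Definition cell_lim (m : Pel sh) (x : ccar X) : ccar TX :=
  exist _ (cclass TX (fun k => tcls (m, crep x k)))
    (ex_intro _ _ (conj (cell_seq_Cauchy m _ (ccar_mem_Cauchy x _ (crep_mem HX x))) eq_refl)).

Lemma cell_lim_mem (m : Pel sh) (x : ccar X) (s : nat -> X) :
  proj1_sig x s -> proj1_sig (cell_lim m x) (fun k => tcls (m, s k)).
Proof.
  intros hs. apply (ccar_mem_of_cequiv HTX _ (fun k => tcls (m, crep x k))).
  - apply (cclass_refl HTX), cell_seq_Cauchy, (ccar_mem_Cauchy x), (crep_mem HX).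
  - apply cell_seq_Cauchy, (ccar_mem_Cauchy x s hs).
  - apply cell_seq_cequiv, (ccar_mem_cequiv HX x); [apply (crep_mem HX) | exact hs].
Qed.

Definition Phi (A : tcar sh CX) : ccar TX := cell_lim (fst (trep A)) (snd (trep A)).

Lemma Phi_tcls_mem (m : Pel sh) (x : ccar X) (s : nat -> X) : proj1_sig x s ->
  proj1_sig (Phi (ctcls (m, x))) (fun k => tcls (m, s k)).
Proof.
  intros hs. unfold Phi. pose proof (trep_mem (ctcls (m, x))) as ha. simpl in ha.
  destruct (trep (ctcls (m, x))) as [ma xa]. cbn [fst snd].
  destruct (tsim_eq_or_glued HCX ha) as [e|(q&q'&h1&h2&h3)].
  - injection e as <- <-. apply cell_lim_mem; auto.
  - simpl in h1, h2, h3. subst x xa.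
    assert (hglue : tcls (ma, sS X q') = tcls (m, sS X q) :> tcar sh X)
      by (apply tcls_tsim, tsim_of_scl_eq; symmetry; auto).
    apply (ccar_mem_of_cequiv HTX _ (fun k => tcls (m, sS X q))).
    + rewrite <- hglue. apply cell_lim_mem, (cS_mem HX).
    + apply cell_seq_Cauchy, (ccar_mem_Cauchy _ s hs).
    + apply cell_seq_cequiv, (ccar_mem_cequiv HX (cS X HC q)); [apply (cS_mem HX) | exact hs].
Qed.

Lemma cdist_Phi_cv (m n : Pel sh) (x y : ccar X) (s t : nat -> X) :
  proj1_sig x s -> proj1_sig y t ->
  Un_cv (fun k => tdist (tcls (m, s k)) (tcls (n, t k))) (cdist (Phi (ctcls (m, x))) (Phi (ctcls (n, y)))).
Proof. intros hs ht. exact (cdist_cv HTX _ _ _ _ (Phi_tcls_mem m x s hs) (Phi_tcls_mem n y t ht)). Qed.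

(* A representative of each point of C(X) chosen to be constant on the boundary,
   so that sampling it at a fixed index preserves the gluing. *)
Definition brep (x : ccar X) : nat -> X :=
  epsilon (inhabits (fun _ => sS X m00))
    (fun s => proj1_sig x s /\ forall q, x = cS X HC q -> s = (fun _ => sS X q)).

Lemma brep_spec (x : ccar X) :
  proj1_sig x (brep x) /\ forall q, x = cS X HC q -> brep x = (fun _ => sS X q).
Proof.
  unfold brep. apply epsilon_spec.
  destruct (classic (exists q, x = cS X HC q)) as [[q ->]|hn].
  - exists (fun _ => sS X q). split; [apply (cS_mem HX)|]. intros q' e.
    assert (q = q') by (apply (sS_inj HCX); exact e). subst; reflexivity.
  - exists (crep x). split; [apply (crep_mem HX)|]. intros q e. exfalso; apply hn; eauto.
Qed.

Lemma brep_sS (k : nat) (p : M0) : brep (sS CX p) k = sS X p.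
Proof. simpl. rewrite (proj2 (brep_spec _) p eq_refl). reflexivity. Qed.

Lemma chain_cost_sample_cv (l : list (TE sh CX * TE sh CX)) :
  Un_cv (fun k => chain_cost (cellmap_chain (fun x : CX => brep x k) l)) (chain_cost l).
Proof.
  induction l as [|[p q] l IH]; simpl; [apply Un_cv_const|].
  apply CV_plus; auto. unfold bd, cellmap; simpl. destruct (_ && _)%bool.
  - apply Un_cv_div, (cdist_cv HX); apply brep_spec.
  - apply Un_cv_const.
Qed.

Lemma cdist_Phi_le_tdist (A B : tcar sh CX) : cdist (Phi A) (Phi B) <= tdist A B.
Proof.
  destruct (tcls_surj A) as [[m x] ->], (tcls_surj B) as [[n y] ->].
  apply (le_tdist HCX). intros a b l ha hb hc. simpl in ha, hb.
  set (sample := fun k (x : CX) => brep x k).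
  eapply Rle_cv_lim;
    [| apply (cdist_Phi_cv m n x y _ _ (proj1 (brep_spec x)) (proj1 (brep_spec y)))
     | apply chain_cost_sample_cv].
  intros k. simpl.
  assert (ea : tcls (m, brep x k) = tcls (cellmap (sample k) a))
    by (apply tcls_tsim, (tsim_cellmap (sample k) (brep_sS k) (m, x) a ha)).
  assert (eb : tcls (n, brep y k) = tcls (cellmap (sample k) b))
    by (apply tcls_tsim, (tsim_cellmap (sample k) (brep_sS k) (n, y) b hb)).
  rewrite ea, eb.
  apply (tdist_le_chain_cost HX (a := cellmap (sample k) a) (b := cellmap (sample k) b));
    [apply tcls_mem | apply tcls_mem |].
  apply chain_ok_cellmap; [apply brep_sS | exact hc].
Qed.

Lemma tdist_le_cdist_Phi (A B : tcar sh CX) : tdist A B <= cdist (Phi A) (Phi B).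
Proof.
  destruct (tcls_surj A) as [[m x] ->], (tcls_surj B) as [[n y] ->].
  set (s := crep x). set (t := crep y).
  assert (hs : proj1_sig x s) by apply (crep_mem HX).
  assert (ht : proj1_sig y t) by apply (crep_mem HX).
  set (lift := fun (m : Pel sh) (u : X) => ctcls (m, cconst HC u)).
  assert (hcv : Un_cv (fun k => tdist (lift m (s k)) (lift n (t k))) (tdist (ctcls (m, x)) (ctcls (n, y)))).
  { apply (Un_cv_perturb (fun _ => tdist (ctcls (m, x)) (ctcls (n, y))) _
             (fun k => cdist x (cconst HC (s k)) / 3 + cdist y (cconst HC (t k)) / 3));
      [apply Un_cv_const | |].
    - intros k. eapply Rle_trans; [apply (sd_diff_le (TD_isSquaMS HCX))|]. simpl.
      pose proof (tdist_same_cell HCX m x (cconst HC (s k))).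
      pose proof (tdist_same_cell HCX n y (cconst HC (t k))). unfold lift. simpl in *. lra.
    - replace 0 with (0 / 3 + 0 / 3) by field.
      apply CV_plus; apply Un_cv_div, (cdist_cconst_cv0 HX); auto. }
  eapply Rle_cv_lim; [| exact hcv | exact (cdist_Phi_cv m n x y s t hs ht)].
  intros k. destruct (cconst_morph HX HC) as [hshort hbd].
  exact (tdist_cellmap_le (Y := CX) (cconst HC) hbd HX HCX hshort (m, s k) (n, t k)).
Qed.

Lemma cdist_Phi (A B : tcar sh CX) : cdist (Phi A) (Phi B) = tdist A B.
Proof. apply Rle_antisym; [apply cdist_Phi_le_tdist | apply tdist_le_cdist_Phi]. Qed.


(* The glued points of P (x) X form a compact set: a Cauchy-like sequence of
   them has a cluster point, found by pigeonholing over cells and sides. *)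
Lemma glued_seq_cluster (mj : nat -> Pel sh) (qj : nat -> M0) :
  (forall e, 0 < e -> exists N, forall i j, (N <= i)%nat -> (N <= j)%nat ->
     tdist (tcls (mj i, sS X (qj i))) (tcls (mj j, sS X (qj j))) < e) ->
  exists m q, forall e, 0 < e -> forall J, exists j, (J <= j)%nat /\
    tdist (tcls (m, sS X q)) (tcls (mj j, sS X (qj j))) < e.
Proof.
  intros hG.
  set (c := fun j => (4 * Pel_code (mj j) + side (qj j))%nat).
  assert (hc : forall i j, c i = c j -> mj i = mj j /\ side (qj i) = side (qj j)).
  { intros i j h. unfold c in h. pose proof (side_le3 (qj i)). pose proof (side_le3 (qj j)).
    assert (Pel_code (mj i) = Pel_code (mj j)) by lia. split; [apply Pel_code_inj; auto| lia]. }
  destruct (colored_Cauchy_cluster 35 c (fun j => par (qj j)) 0 1) as (v&t&ht&[j0 hj0]&hcl).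
  - intros j. unfold c. pose proof (Pel_code_le8 (mj j)). pose proof (side_le3 (qj j)). lia.
  - intros j. apply par_bounds.
  - intros e he. destruct (hG (e/3)) as [N hN]; [lra|].
    exists N. intros i j hi hj hij. destruct (hc i j hij) as [em es].
    pose proof (par_dist_le_l1 (qj i) (qj j) es).
    pose proof (l1_scl_le_tdist HX (mj i, sS X (qj i)) (mj j, sS X (qj j)) (qj i) (qj j) eq_refl eq_refl)
      as hl. pose proof (hN i j hi hj) as hd. simpl in hl. rewrite em, l1_scl in hl. rewrite em in hd.
    lra.
  - destruct (side_point_exists HX (side (qj j0)) t (side_le3 _) ht) as [qs hqs].
    exists (mj j0), qs. intros e he J.
    destruct (hcl (3 * e) ltac:(lra) J) as (j&hj&hcj&hpj).
    exists j. split; auto.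
    destruct (hc j j0 ltac:(congruence)) as [em es]. rewrite <- em.
    pose proof (tdist_same_cell HX (mj j) (sS X qs) (sS X (qj j))).
    rewrite (sd_sym HX), (hqs (qj j) es), Rabs_minus_sym in H. lra.
Qed.

Lemma boundary_shadow (sig : nat -> tcar sh X) :
  (forall e, 0 < e -> forall K, exists k, (K <= k)%nat /\
     exists q, sd X (snd (trep (sig k))) (sS X q) < e) ->
  exists (kj : nat -> nat) (qj : nat -> M0), forall j, (j <= kj j)%nat /\
    tdist (sig (kj j)) (tcls (fst (trep (sig (kj j))), sS X (qj j))) < / (INR j + 1).
Proof.
  intros hnear.
  set (P := fun j (kq : nat * M0) =>
              (j <= fst kq)%nat /\ sd X (snd (trep (sig (fst kq)))) (sS X (snd kq)) < / (INR j + 1)).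
  assert (hkq : forall j, P j (epsilon (inhabits (0%nat, m00)) (P j))).
  { intros j. apply epsilon_spec.
    destruct (hnear (/ (INR j + 1)) (inv_INR_succ_pos j) j) as (k&hk&q&hq). exists (k, q). split; auto. }
  exists (fun j => fst (epsilon (inhabits (0%nat, m00)) (P j))),
         (fun j => snd (epsilon (inhabits (0%nat, m00)) (P j))).
  intros j. destruct (hkq j) as [hk hd]. split; auto.
  eapply Rle_lt_trans; [apply (tdist_trep_same_cell HX)|].
  pose proof (sd_ge0 HX (snd (trep (sig (fst (epsilon (inhabits (0%nat, m00)) (P j))))))
                (sS X (snd (epsilon (inhabits (0%nat, m00)) (P j))))).
  pose proof (inv_INR_succ_pos j). lra.
Qed.

Lemma boundary_limit_of_Cauchy (sig : nat -> tcar sh X) : Cauchy TX sig ->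
  (forall e, 0 < e -> forall K, exists k, (K <= k)%nat /\
     exists q, sd X (snd (trep (sig k))) (sS X q) < e) ->
  exists m q, cequiv TX (fun _ => tcls (m, sS X q)) sig.
Proof.
  intros hC hnear. destruct (boundary_shadow sig hnear) as (kj&qj&hkq).
  set (mj := fun j => fst (trep (sig (kj j)))).
  set (G := fun j => @tcls sh X (mj j, sS X (qj j))).
  assert (hGC : forall e, 0 < e -> exists N, forall i j, (N <= i)%nat -> (N <= j)%nat ->
                  tdist (G i) (G j) < e).
  { intros e he. destruct (inv_INR_succ_small (e/3)) as [N1 hN1]; [lra|].
    destruct (hC (e/3)) as [N2 hN2]; [lra|].
    exists (Nat.max N1 N2). intros i j hi hj.
    destruct (hkq i) as [ki hGi], (hkq j) as [kj' hGj].
    pose proof (hN2 (kj i) (kj j) ltac:(lia) ltac:(lia)). simpl in H.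
    pose proof (tdist_triangle HX (G i) (sig (kj i)) (G j)).
    pose proof (tdist_triangle HX (sig (kj i)) (sig (kj j)) (G j)).
    rewrite (tdist_sym HX (G i) (sig (kj i))) in H0.
    pose proof (hN1 i ltac:(lia)). pose proof (hN1 j ltac:(lia)). unfold G, mj in *. lra. }
  destruct (glued_seq_cluster mj qj hGC) as (m&q&hcl).
  exists m, q. apply (Cauchy_cequiv_of_cluster HTX); auto.
  intros e he K. destruct (inv_INR_succ_small (e/2)) as [N hN]; [lra|].
  destruct (hcl (e/2) ltac:(lra) (Nat.max K N)) as (j&hj&hcj).
  destruct (hkq j) as [hk hGj]. exists (kj j). split; [lia|]. simpl.
  pose proof (tdist_triangle HX (tcls (m, sS X q)) (G j) (sig (kj j))).
  rewrite (tdist_sym HX (G j) (sig (kj j))) in H. pose proof (hN j ltac:(lia)).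
  unfold G, mj in *. lra.
Qed.

Lemma cell_seq_of_far_Cauchy (sig : nat -> tcar sh X) (e0 : R) (K0 : nat) : Cauchy TX sig -> 0 < e0 ->
  (forall k, (K0 <= k)%nat -> forall q, e0 <= sd X (snd (trep (sig k))) (sS X q)) ->
  exists m s, Cauchy X s /\ cequiv TX (fun k => tcls (m, s k)) sig.
Proof.
  intros hC he0 hfar.
  assert (he02 : e0 <= 2).
  { pose proof (hfar K0 (le_n _) m00). pose proof (sd_le2 HX (snd (trep (sig K0))) (sS X m00)). lra. }
  set (e := fun k => trep (sig k)).
  assert (he : forall k, sig k = tcls (e k)) by (intros; apply tcls_trep).
  destruct (hC (e0/3)) as [N hN]; [lra|]. simpl in hN.
  set (N' := Nat.max N K0).
  assert (hb : forall i j, (N' <= i)%nat -> (N' <= j)%nat ->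
             fst (e i) = fst (e j) /\ sd X (snd (e i)) (snd (e j)) / 3 <= tdist (sig i) (sig j)).
  { intros i j hi hj. pose proof (hN i j ltac:(lia) ltac:(lia)) as H. rewrite !he in H |- *.
    pose proof (bd_le_tdist_off_boundary HX (e i) (e j) e0 (hfar i ltac:(lia)) H).
    destruct (bd_cases (e i) (e j)) as [[k1 k2]|[_ k2]]; [split; auto|]; lra. }
  set (s := fun k => snd (e (Nat.max k N'))).
  exists (fst (e N')), s. split.
  - intros ep hep. destruct (hC (ep/3)) as [M hM]; [lra|]. exists M. intros i j hi hj. unfold s.
    destruct (hb (Nat.max i N') (Nat.max j N') ltac:(lia) ltac:(lia)) as [_ k].
    pose proof (hM (Nat.max i N') (Nat.max j N') ltac:(lia) ltac:(lia)). simpl in H. lra.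
  - intros ep hep. exists N'. intros k hk. unfold R_dist. rewrite Rminus_0_r.
    assert (tcls (fst (e N'), s k) = sig k).
    { unfold s. rewrite (Nat.max_l k N' hk). destruct (hb N' k (le_n _) hk) as [k1 _].
      rewrite k1, <- surjective_pairing, he. reflexivity. }
    simpl. rewrite H, (tdist_refl (sd_ge0 HX)), Rabs_R0. auto.
Qed.

Lemma Phi_surj (Cl : ccar TX) : exists A, Phi A = Cl.
Proof.
  destruct (ccar_inhabited HTX Cl) as [sig hsig].
  pose proof (ccar_mem_Cauchy Cl sig hsig) as hC.
  assert (hreduce : forall m x s, proj1_sig x s -> cequiv TX (fun k => tcls (m, s k)) sig ->
                      Phi (ctcls (m, x)) = Cl).
  { intros m x s hs hq. symmetry. apply (ccar_eq_of_mem HTX _ _ sig hsig).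
    apply (ccar_mem_of_cequiv HTX _ _ _ (Phi_tcls_mem m x s hs) hC hq). }
  destruct (classic (forall e, 0 < e -> forall K, exists k, (K <= k)%nat /\
                       exists q, sd X (snd (trep (sig k))) (sS X q) < e)) as [hnear|hfar].
  - destruct (boundary_limit_of_Cauchy sig hC hnear) as (m&q&hq).
    exists (ctcls (m, cS X HC q)). apply (hreduce m _ (fun _ => sS X q)); auto. apply (cS_mem HX).
  - assert (hfar' : exists e0 K0, 0 < e0 /\
              forall k, (K0 <= k)%nat -> forall q, e0 <= sd X (snd (trep (sig k))) (sS X q)).
    { apply NNPP; intro hn; apply hfar; intros ep hep K; apply NNPP; intro hk; apply hn.
      exists ep, K; split; auto; intros k hk' q; apply Rnot_lt_le; intro hlt; apply hk.
      exists k; split; auto; exists q; auto. }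
    destruct hfar' as (e0&K0&he0&hfar').
    destruct (cell_seq_of_far_Cauchy sig e0 K0 hC he0 hfar') as (m&s&hs&hq).
    exists (ctcls (m, exist _ (cclass X s) (ex_intro _ s (conj hs eq_refl)) : ccar X)).
    apply (hreduce m _ s); auto. simpl. apply (cclass_refl HX); auto.
Qed.


Lemma Phi_tS (p : M0) : Phi (tS sh CX p) = cS TX (tdist_refl (isSquaMS_nonneg HX)) p.
Proof.
  destruct (scl_surj (sh := sh) p) as (m&q&hq).
  apply (ccar_eq_of_mem HTX _ _ (fun _ => tcls (m, sS X q))).
  - rewrite (tS_eq (X := CX) p m q hq). apply Phi_tcls_mem, (cS_mem HX).
  - rewrite <- (tS_eq (X := X) p m q hq). apply (cS_mem HTX).
Qed.

Lemma Phi_inj (A B : tcar sh CX) : Phi A = Phi B -> A = B.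
Proof. intros h. apply (tdist_eq0 HCX). rewrite <- cdist_Phi, h. apply (cdist_refl HTX). Qed.

Lemma Phi_sq_iso : sq_iso (TD sh CX) (CD TX (tdist_refl (isSquaMS_nonneg HX))) Phi.
Proof.
  split; [exact (TD_isSquaMS HCX)|].
  split; [exact (CD_isSquaMS HTX _)|].
  split; [split; [intros a b; simpl; rewrite cdist_Phi; lra | exact Phi_tS]|].
  set (g := fun C : ccar TX => epsilon (inhabits (tS sh CX m00)) (fun A => Phi A = C)).
  assert (hg : forall C, Phi (g C) = C) by (intros C; apply epsilon_spec, Phi_surj).
  exists g. split; [split|split].
  - intros a b. simpl. rewrite <- cdist_Phi, !hg. lra.
  - intros p. simpl. apply Phi_inj. rewrite hg. symmetry. apply Phi_tS.
  - intros x. apply Phi_inj. rewrite hg. reflexivity.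
  - exact hg.
Qed.

End Comparison.

Section Naturality.
Context {sh : shape} {X Y : SqData} (HX : isSquaMS X) (HY : isSquaMS Y) (f : X -> Y) (hf : morph X Y f).

Lemma tensmap_tcls (a : TE sh X) : tensmap sh X Y f (tcls a) = tcls (cellmap f a).
Proof.
  change (tcls (cellmap f (trep (tcls a))) = tcls (cellmap f a)).
  apply tcls_tsim, (tsim_cellmap f (proj2 hf)), rst_sym, (trep_mem (tcls a)).
Qed.

Lemma tensmap_short : short (TD sh X) (TD sh Y) (tensmap sh X Y f).
Proof.
  intros A B. destruct (tcls_surj A) as [a ->], (tcls_surj B) as [b ->].
  simpl. rewrite !tensmap_tcls. apply (tdist_cellmap_le f (proj2 hf) HX HY (proj1 hf)).
Qed.

Lemma Phi_natural (m : Pel sh) (x : ccar X) (y : ccar Y) : Crel X Y f x y ->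
  Crel (TD sh X) (TD sh Y) (tensmap sh X Y f)
       (Phi HX (@tcls sh (CD X (isSquaMS_refl HX)) (m, x)))
       (Phi HY (@tcls sh (CD Y (isSquaMS_refl HY)) (m, y))).
Proof.
  intros hxy sig hsig.
  set (s := crep x). assert (hs : proj1_sig x s) by apply (crep_mem HX).
  apply (ccar_mem_of_cequiv (TD_isSquaMS HY) _ _ _ (Phi_tcls_mem HY m y _ (hxy s hs))).
  - intros e he. destruct (ccar_mem_Cauchy _ sig hsig e he) as [N hN].
    exists N. intros n k hn hk. pose proof (tensmap_short (sig n) (sig k)). specialize (hN n k hn hk).
    simpl in *. lra.
  - refine (Un_cv_squeeze0 _ _ _ (ccar_mem_cequiv (TD_isSquaMS HX) _ _ _ (Phi_tcls_mem HX m x s hs) hsig)).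
    intros k. split; [apply (tdist_ge0 HY)|]. simpl.
    pose proof (tensmap_short (tcls (m, s k)) (sig k)) as h. rewrite tensmap_tcls in h. exact h.
Qed.

End Naturality.

Theorem mainTheorem16 (sh : shape) :
  exists Phi : forall (X : SqData) (HX : isSquaMS X),
      tcar sh (CD X (isSquaMS_refl HX)) -> ccar (TD sh X),
    (forall (X : SqData) (HX : isSquaMS X),
       sq_iso (TD sh (CD X (isSquaMS_refl HX)))
              (CD (TD sh X) (tdist_refl (isSquaMS_nonneg HX)))
              (Phi X HX)
       /\ (forall (m : Pel sh) (x : ccar X) (s : nat -> X),
             proj1_sig x s ->
             proj1_sig (Phi X HX (@tcls sh (CD X (isSquaMS_refl HX)) (m, x)))
                       (fun k => @tcls sh X (m, s k))))
    /\ (forall (X Y : SqData) (HX : isSquaMS X) (HY : isSquaMS Y) (f : X -> Y),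
          morph X Y f ->
          forall (m : Pel sh) (x : ccar X) (y : ccar Y),
            Crel X Y f x y ->
            Crel (TD sh X) (TD sh Y) (tensmap sh X Y f)
                 (Phi X HX (@tcls sh (CD X (isSquaMS_refl HX)) (m, x)))
                 (Phi Y HY (@tcls sh (CD Y (isSquaMS_refl HY)) (m, y)))).
Proof.
  exists (fun X HX => @Phi sh X HX). split.
  - intros X HX. split; [apply Phi_sq_iso | apply Phi_tcls_mem].
  - intros X Y HX HY f hf. apply (Phi_natural HX HY f hf).
Qed.
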